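(* In a Fisher market in which every buyer has a Leontief utility function, run asynchronous tatonnement with update rule $p_j^{t+}=p_j^t(1+\lambda\min\{\tilde z_j,1\}(t-\tau_j))$, $0<\lambda\le\frac1{23.46}$, from strictly positive initial prices. Then for every $\epsilon>0$ there is a finite time $T_\epsilon$ such that for every good $j$, every $t\ge T_\epsilon$ and every $0\le\Delta t\le1$, $|p_j^t-p_j^{t+\Delta t}|\le\epsilon$.
   Context: A Fisher market has $n$ goods, each with supply $1$, and buyers $i$ with budgets $e_i>0$. At prices $p$, buyer $i$ demands a utility-maximizing bundle $(x_{ij}(p))_j$ of cost at most $e_i$; $x_j(p)=\sum_ix_{ij}(p)$, excess demand $z_j(p)=x_j(p)-1$. A Leontief utility is $u_i(x)=\min_{j\in S_i}b_{ij}x_{ij}$ for a nonempty set $S_i$ of goods and $b_{ij}>0$. Asynchronous tatonnement: continuous time $t\ge0$; each price $p_j$ changes only at discrete update times, no two updates simultaneous, consecutive updates to the same price at most one time unit apart; $p^t$ denotes current prices just before any update at time $t$, $p_j^{t+}$ the value just after. At an update to $p_j$ at time $t$, $\tau_j$ is the previous update time of $p_j$ ($0$ if none) and $\tilde z_j$ is any value between the minimum and maximum of $z_j(p^{t'})$ over $t'\in(\tau_j,t]$. *)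

From Stdlib Require Import Reals.
Open Scope R_scope.

Fixpoint rsum (k : nat) (f : nat -> R) : R :=
  match k with
  | O => 0
  | S k' => rsum k' f + f k'
  end.

Fixpoint leon_aux (S : nat -> bool) (b x : nat -> R) (k : nat) : option R :=
  match k with
  | O => None
  | Datatypes.S k' =>
      let r := leon_aux S b x k' in
      if S k' then
        Some (match r with
              | None => b k' * x k'
              | Some v => Rmin v (b k' * x k')
              end)
      else r
  end.

(* Leontief utility u(x) = min_{j in S, j < n} b_j x_j  (S nonempty in use) *)
Definition leontief (n : nat) (S : nat -> bool) (b x : nat -> R) : R :=
  match leon_aux S b x n with Some v => v | None => 0 end.

Definition cost (n : nat) (p x : nat -> R) : R := rsum n (fun j => p j * x j).

Definition nonneg_bundle (n : nat) (x : nat -> R) : Prop :=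
  forall j, (j < n)%nat -> 0 <= x j.

Definition leontief_demand (n : nat) (S : nat -> bool) (b : nat -> R) (e : R)
    (p x : nat -> R) : Prop :=
  nonneg_bundle n x /\ cost n p x <= e /\
  forall y, nonneg_bundle n y -> cost n p y <= e ->
    leontief n S b y <= leontief n S b x.

Definition excess (m : nat) (X : nat -> (nat -> R) -> nat -> R)
    (p : nat -> R) (j : nat) : R :=
  rsum m (fun i => X i p j) - 1.

(* The potential [phi p = sum_j p_j - sum_i e_i ln (sum_{j in S_i} p_j / b_ij)] is convex
   with gradient [- z(p)].  An update of [p_j] by the factor [1 + lambda min(z~_j, 1) dt]
   lowers it by at least [lambda/2 dt p_j min(z~_j, 1)^2], up to second-order terms and the
   error of using a stale excess demand; since prices move by at most a factor [23/21] within
   one time unit, both are absorbed when [lambda <= 1/23].  As [phi] is bounded below, the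
   sum of [dt p_j min(z~_j, 1)^2] over all updates is finite, and by AM-GM the total move of
   a price over a unit window is small once that sum has converged. *)

From Stdlib Require Import Reals Lra Lia ClassicalEpsilon Classical.
Open Scope R_scope.

Lemma rsum_ext k f g : (forall i, (i < k)%nat -> f i = g i) -> rsum k f = rsum k g.
Proof.
  induction k; simpl; intros H; auto.
  rewrite IHk by (intros; apply H; lia). rewrite H by lia; auto.
Qed.

Lemma rsum_le k f g : (forall i, (i < k)%nat -> f i <= g i) -> rsum k f <= rsum k g.
Proof.
  induction k; simpl; intros H; [lra|].
  assert (rsum k f <= rsum k g) by (apply IHk; intros; apply H; lia).
  specialize (H k ltac:(lia)). lra.
Qed.

Lemma rsum_zero k : rsum k (fun _ => 0) = 0.
Proof. induction k; simpl; auto. rewrite IHk; lra. Qed.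

Lemma rsum_nonneg k f : (forall i, (i < k)%nat -> 0 <= f i) -> 0 <= rsum k f.
Proof. intros H. rewrite <- (rsum_zero k). apply rsum_le; auto. Qed.

Lemma rsum_plus k f g : rsum k (fun i => f i + g i) = rsum k f + rsum k g.
Proof. induction k; simpl; [lra|]. rewrite IHk; lra. Qed.

Lemma rsum_minus k f g : rsum k (fun i => f i - g i) = rsum k f - rsum k g.
Proof. induction k; simpl; [lra|]. rewrite IHk; lra. Qed.

Lemma rsum_scal k c f : rsum k (fun i => c * f i) = c * rsum k f.
Proof. induction k; simpl; [lra|]. rewrite IHk; lra. Qed.

Lemma rsum_scal_r k c f : rsum k (fun i => f i * c) = rsum k f * c.
Proof. induction k; simpl; [lra|]. rewrite IHk; lra. Qed.

Lemma rsum_comm a b (f : nat -> nat -> R) :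
  rsum a (fun x => rsum b (fun y => f x y)) = rsum b (fun y => rsum a (fun x => f x y)).
Proof.
  induction a; simpl. { rewrite rsum_zero; auto. }
  rewrite IHa, <- rsum_plus. auto.
Qed.

Lemma rsum_term_le k f i :
  (forall i, (i < k)%nat -> 0 <= f i) -> (i < k)%nat -> f i <= rsum k f.
Proof.
  induction k; intros H Hi; [lia|]. simpl.
  assert (0 <= rsum k f) by (apply rsum_nonneg; intros; apply H; lia).
  destruct (Nat.eq_dec i k). { subst; lra. }
  assert (f i <= rsum k f) by (apply IHk; [intros; apply H; lia| lia]).
  specialize (H k ltac:(lia)); lra.
Qed.

Lemma Rabs_rsum_le k f : Rabs (rsum k f) <= rsum k (fun i => Rabs (f i)).
Proof.
  induction k; simpl. { rewrite Rabs_R0; lra. }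
  eapply Rle_trans; [apply Rabs_triang|]. lra.
Qed.

Lemma rsum_upd k f j v : (j < k)%nat ->
  rsum k (fun i => if Nat.eqb i j then v else f i) = rsum k f - f j + v.
Proof.
  induction k; intros Hj; [lia|]. simpl.
  destruct (Nat.eq_dec j k).
  - subst. rewrite Nat.eqb_refl.
    rewrite (rsum_ext k _ f); [lra|].
    intros i Hi. destruct (Nat.eqb_spec i k); auto; lia.
  - rewrite IHk by lia. destruct (Nat.eqb_spec k j); [lia|]. lra.
Qed.

Lemma rsum_le_eq k f g : (forall i, (i < k)%nat -> f i <= g i) -> rsum k g <= rsum k f ->
  forall i, (i < k)%nat -> f i = g i.
Proof.
  induction k; intros H Hs i Hi; [lia|]. simpl in Hs.
  assert (rsum k f <= rsum k g) by (apply rsum_le; intros; apply H; lia).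
  assert (Hk := H k ltac:(lia)).
  destruct (Nat.eq_dec i k). { subst; lra. }
  apply IHk; [intros; apply H; lia | lra | lia].
Qed.

Lemma rsum_extend a b f : (a <= b)%nat ->
  rsum a f = rsum b (fun k => if Nat.ltb k a then f k else 0).
Proof.
  intros Hab. induction b.
  - assert (a = 0%nat) by lia. subst; auto.
  - destruct (Nat.eq_dec a (S b)).
    + subst. apply rsum_ext. intros i Hi. destruct (Nat.ltb_spec i (S b)); auto; lia.
    + simpl. rewrite IHb by lia. destruct (Nat.ltb_spec b a); [lia|]. lra.
Qed.

Lemma rsum_swap3 A (X : nat -> nat) C (K : nat -> nat -> nat -> R) :
  rsum A (fun a => rsum (X a) (fun x => rsum C (fun c => K a x c))) =
  rsum C (fun c => rsum A (fun a => rsum (X a) (fun x => K a x c))).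
Proof.
  rewrite (rsum_ext A _ (fun a => rsum C (fun c => rsum (X a) (fun x => K a x c)))).
  - apply rsum_comm.
  - intros a Ha. apply rsum_comm.
Qed.

Lemma rsum_swap5 A (X : nat -> nat) M C (Y : nat -> nat) (F : nat -> nat -> nat -> nat -> nat -> R) :
  rsum A (fun a => rsum (X a) (fun x => rsum M (fun i => rsum C (fun c => rsum (Y c) (fun y => F a x i c y))))) =
  rsum C (fun c => rsum (Y c) (fun y => rsum M (fun i => rsum A (fun a => rsum (X a) (fun x => F a x i c y))))).
Proof.
  rewrite rsum_swap3.
  rewrite (rsum_ext M _ (fun i => rsum C (fun c => rsum (Y c) (fun y => rsum A (fun a => rsum (X a) (fun x => F a x i c y)))))).
  - rewrite rsum_comm. apply rsum_ext. intros c Hc. apply rsum_comm.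
  - intros i Hi. rewrite (rsum_swap3 A X C (fun a x c => rsum (Y c) (fun y => F a x i c y))).
    apply rsum_ext. intros c Hc. apply (rsum_swap3 A X (Y c) (fun a x y => F a x i c y)).
Qed.

Fixpoint nsum (k : nat) (f : nat -> nat) : nat :=
  match k with O => O | S k' => (nsum k' f + f k')%nat end.

Lemma nsum_ext k f g : (forall i, (i < k)%nat -> f i = g i) -> nsum k f = nsum k g.
Proof. induction k; simpl; intros H; auto. rewrite IHk, H; auto. Qed.

Lemma nsum_le k f g : (forall i, (i < k)%nat -> (f i <= g i)%nat) -> (nsum k f <= nsum k g)%nat.
Proof.
  induction k; simpl; intros H; [lia|].
  specialize (IHk ltac:(intros; apply H; lia)). specialize (H k ltac:(lia)). lia.
Qed.

Lemma nsum_lt k f g j : (forall i, (i < k)%nat -> (f i <= g i)%nat) -> (j < k)%nat ->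
  (f j < g j)%nat -> (nsum k f < nsum k g)%nat.
Proof.
  induction k; simpl; intros H Hj Hlt; [lia|]. destruct (Nat.eq_dec j k).
  - subst. pose proof (nsum_le k f g ltac:(intros; apply H; lia)). lia.
  - specialize (IHk ltac:(intros; apply H; lia) ltac:(lia) Hlt). specialize (H k ltac:(lia)). lia.
Qed.

Lemma nsum_eq0 k f : nsum k f = 0%nat -> forall i, (i < k)%nat -> f i = 0%nat.
Proof.
  induction k; simpl; intros H i Hi; [lia|].
  destruct (Nat.eq_dec i k); subst; [lia|]. apply IHk; lia.
Qed.

Lemma nsum_upd k f g j : (j < k)%nat -> (forall i, (i < k)%nat -> i <> j -> f i = g i) ->
  f j = S (g j) -> nsum k f = S (nsum k g).
Proof.
  induction k; intros Hj H Hfj; [lia|]. simpl. destruct (Nat.eq_dec j k).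
  - subst. rewrite (nsum_ext k f g) by (intros; apply H; lia). lia.
  - rewrite IHk; auto; try lia. rewrite H by lia. lia.
Qed.

Lemma argmax_exists n (P : nat -> bool) (f : nat -> R) : (exists g, (g < n)%nat /\ P g = true) ->
  exists g0, (g0 < n)%nat /\ P g0 = true /\ forall g, (g < n)%nat -> P g = true -> f g <= f g0.
Proof.
  induction n; intros [g [Hg HP]]; [lia|].
  destruct (classic (exists g, (g < n)%nat /\ P g = true)) as [Hex|Hno].
  - destruct (IHn Hex) as [g0 [Hg0 [HP0 Hm]]].
    destruct (P n) eqn:En; [destruct (Rle_dec (f g0) (f n))|].
    + exists n. repeat split; auto. intros g' Hg' HP'. destruct (Nat.eq_dec g' n); [subst; lra|].
      specialize (Hm g' ltac:(lia) HP'); lra.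
    + exists g0. repeat split; auto. intros g' Hg' HP'. destruct (Nat.eq_dec g' n); [subst; lra|].
      apply Hm; auto; lia.
    + exists g0. repeat split; auto. intros g' Hg' HP'. destruct (Nat.eq_dec g' n); [subst; congruence|].
      apply Hm; auto; lia.
  - assert (g = n) by (destruct (Nat.eq_dec g n); auto; exfalso; apply Hno; exists g; split; auto; lia).
    subst. exists n. repeat split; auto. intros g' Hg' HP'. destruct (Nat.eq_dec g' n); [subst; lra|].
    exfalso; apply Hno; exists g'; split; auto; lia.
Qed.

Lemma ln_le_sub1 y : 0 < y -> ln y <= y - 1.
Proof. intros H. pose proof (exp_ineq1_le (ln y)). rewrite exp_ln in H0; lra. Qed.

Lemma ln_1p_ge y : -1/23 <= y -> y - 23/22 * (y*y) <= ln (1 + y).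
Proof.
  intros H. assert (0 < 1 + y) by lra.
  pose proof (ln_le_sub1 (/ (1+y)) ltac:(apply Rinv_0_lt_compat; lra)).
  rewrite ln_Rinv in H1 by lra.
  assert (/(1+y) - 1 = - (y / (1+y))) by (field; lra).
  assert (y / (1+y) = y - y*y/(1+y)) by (field; lra).
  assert (y*y/(1+y) <= 23/22*(y*y)).
  { apply Rmult_le_reg_r with (1+y); [lra|]. unfold Rdiv. rewrite Rmult_assoc, Rinv_l by lra.
    assert (0 <= y*y) by nra. nra. }
  lra.
Qed.

(* The first-order gain of an update with capped excess [Rmin Z 1] when the true demand
   [x] satisfies [21/23 x <= Z + 1]. *)
Lemma capped_drift_ge Z x : 0 <= x -> 21/23 * x <= Z + 1 ->
  Rmin Z 1 * Rmin Z 1 / 2 + 21/92 * (Rmin Z 1 * Rmin Z 1) * x <= Rmin Z 1 * Z.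
Proof.
  intros Hx HZ. set (mk := Rmin Z 1).
  assert (HG1 : mk * mk <= mk * Z /\ mk * mk * (Z + 1) / 2 <= mk * Z)
    by (unfold mk, Rmin; destruct Rle_dec; split; nra).
  assert (mk * mk * (21/23 * x) <= mk * mk * (Z + 1)) by (apply Rmult_le_compat_l; nra).
  nra.
Qed.

Lemma near_sup_exists (f : R -> R) M : (forall T, 0 < T -> f T <= M) ->
  forall delta, 0 < delta -> exists T0, 0 < T0 /\ forall T1, 0 < T1 -> f T1 - f T0 <= delta.
Proof.
  intros HM delta Hdelta.
  set (E := fun y => exists T, 0 < T /\ y = f T).
  assert (Hb : bound E) by (exists M; intros y [T [HT ->]]; apply HM; auto).
  assert (Hne : exists y, E y) by (exists (f 1); exists 1; split; auto; lra).
  destruct (completeness E Hb Hne) as [L [HL1 HL2]].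
  destruct (classic (exists T0, 0 < T0 /\ L - delta < f T0)) as [[T0 [HT0 HL]]|Hno].
  - exists T0. split; auto. intros T1 HT1. assert (f T1 <= L) by (apply HL1; exists T1; split; auto). lra.
  - exfalso. assert (L <= L - delta); [|lra]. apply HL2. intros y [T [HT ->]].
    destruct (Rle_dec (f T) (L - delta)); auto. exfalso; apply Hno; exists T; split; auto; lra.
Qed.

Definition unit_cost n (supp : nat -> bool) (b q : nat -> R) :=
  rsum n (fun k => if supp k then q k / b k else 0).

Lemma leon_aux_None supp b x K : leon_aux supp b x K = None -> forall k, (k < K)%nat -> supp k = false.
Proof.
  induction K; intros H k Hk; [lia|]. simpl in H. destruct (supp K) eqn:E.
  - destruct (leon_aux supp b x K); discriminate.
  - destruct (Nat.eq_dec k K); [subst; auto|]. apply IHK; auto; lia.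
Qed.

Lemma leon_aux_Some supp b x K : (exists k, (k < K)%nat /\ supp k = true) ->
  exists v, leon_aux supp b x K = Some v.
Proof.
  induction K; intros [k [Hk HS]]; [lia|]. simpl.
  destruct (supp K) eqn:E; [destruct (leon_aux supp b x K); eauto|].
  apply IHK. exists k; split; auto. destruct (Nat.eq_dec k K); subst; [congruence|lia].
Qed.

Lemma leon_aux_le supp b x K v : leon_aux supp b x K = Some v ->
  forall k, (k < K)%nat -> supp k = true -> v <= b k * x k.
Proof.
  revert v. induction K; intros v H k Hk HS; [lia|]. simpl in H.
  destruct (supp K) eqn:E.
  - destruct (leon_aux supp b x K) as [r|] eqn:E2; inversion H; subst.
    + destruct (Nat.eq_dec k K); [subst; apply Rmin_r|].
      eapply Rle_trans; [apply Rmin_l| apply IHK; auto; lia].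
    + destruct (Nat.eq_dec k K); [subst; lra|].
      rewrite (leon_aux_None supp b x K E2 k) in HS by lia. discriminate.
  - destruct (Nat.eq_dec k K); [subst; congruence|]. apply IHK; auto; lia.
Qed.

Lemma leon_aux_attained supp b x K v : leon_aux supp b x K = Some v ->
  exists k, (k < K)%nat /\ supp k = true /\ v = b k * x k.
Proof.
  revert v. induction K; intros v H; simpl in H; [discriminate|].
  destruct (supp K) eqn:E.
  - destruct (leon_aux supp b x K) as [r|] eqn:E2; inversion H; subst.
    + unfold Rmin. destruct (Rle_dec r (b K * x K)).
      * destruct (IHK r eq_refl) as [k [? [? ?]]]. exists k; repeat split; auto; lia.
      * exists K; repeat split; auto.
    + exists K; auto.
  - destruct (IHK v H) as [k [? [? ?]]]. exists k; repeat split; auto; lia.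
Qed.

Section LeontiefBuyer.
Variables (n : nat) (supp : nat -> bool) (b : nat -> R).
Hypothesis supp_nonempty : exists j, (j < n)%nat /\ supp j = true.
Hypothesis b_pos : forall j, (j < n)%nat -> supp j = true -> 0 < b j.

Lemma unit_cost_pos q : (forall j, (j < n)%nat -> 0 < q j) -> 0 < unit_cost n supp b q.
Proof.
  intros Hq. destruct supp_nonempty as [j [Hj HS]]. unfold unit_cost.
  eapply Rlt_le_trans; [|apply (rsum_term_le n _ j)]; cbv beta; auto.
  - rewrite HS. apply Rdiv_lt_0_compat; auto.
  - intros i Hi. destruct (supp i) eqn:E; [|lra]. apply Rlt_le, Rdiv_lt_0_compat; auto.
Qed.

(* The bundle buying [e / unit_cost] units of utility costs exactly [e]; any optimal
   bundle dominates it coordinatewise on [supp] and has no more cost, so equals it. *)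
Lemma leontief_demand_eq e q x : 0 < e -> (forall j, (j < n)%nat -> 0 < q j) ->
  leontief_demand n supp b e q x ->
  forall j, (j < n)%nat -> x j = if supp j then e / (b j * unit_cost n supp b q) else 0.
Proof.
  intros He Hq [Hnn [Hc Hopt]] j Hj.
  assert (HW := unit_cost_pos q Hq). set (W := unit_cost n supp b q) in *.
  set (vs := e / W).
  assert (Hvs : 0 < vs) by (apply Rdiv_lt_0_compat; auto).
  set (y := fun k => if supp k then vs / b k else 0).
  assert (Hy : nonneg_bundle n y).
  { intros k Hk. unfold y. destruct (supp k) eqn:E; [|lra]. apply Rlt_le, Rdiv_lt_0_compat; auto. }
  assert (Hcy : cost n q y = e).
  { unfold cost, y. transitivity (vs * W).
    - unfold W, unit_cost. rewrite <- rsum_scal. apply rsum_ext. intros k Hk.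
      destruct (supp k) eqn:E; [|lra]. field. apply Rgt_not_eq, b_pos; auto.
    - unfold vs; field; lra. }
  assert (Hly : leontief n supp b y = vs).
  { unfold leontief. destruct (leon_aux_Some supp b y n supp_nonempty) as [v Hv]. rewrite Hv.
    destruct (leon_aux_attained _ _ _ _ _ Hv) as [k [Hk [Hsk ->]]]. unfold y; rewrite Hsk.
    field. apply Rgt_not_eq, b_pos; auto. }
  assert (Hlx := Hopt y Hy ltac:(lra)). rewrite Hly in Hlx.
  unfold leontief in Hlx. destruct (leon_aux_Some supp b x n supp_nonempty) as [vx Hvx]. rewrite Hvx in Hlx.
  assert (Hle : forall k, (k < n)%nat -> q k * y k <= q k * x k).
  { intros k Hk. unfold y. destruct (supp k) eqn:E.
    - apply Rmult_le_compat_l; [apply Rlt_le; auto|].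
      pose proof (leon_aux_le _ _ _ _ _ Hvx k Hk E). pose proof (b_pos k Hk E).
      apply Rmult_le_reg_l with (b k); auto. field_simplify; lra.
    - rewrite Rmult_0_r. apply Rmult_le_pos; [apply Rlt_le; auto| apply Hnn; auto]. }
  assert (Heq := rsum_le_eq n _ _ Hle ltac:(unfold cost in *; fold y in Hcy; lra) j Hj).
  assert (q j <> 0) by (apply Rgt_not_eq, Hq; auto).
  assert (x j = y j) by (apply Rmult_eq_reg_l with (q j); auto).
  rewrite H0. unfold y, vs. destruct (supp j) eqn:E; auto.
  field. split; [apply Rgt_not_eq; auto| apply Rgt_not_eq, b_pos; auto].
Qed.

End LeontiefBuyer.

Definition set_price (q : nat -> R) j v := fun h => if Nat.eqb h j then v else q h.

Definition cost_share n (supp : nat -> bool) (b q : nat -> R) j := q j / (b j * unit_cost n supp b q).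

Definition aggregate_demand n m (supp : nat -> nat -> bool) (b : nat -> nat -> R) (e : nat -> R) q j :=
  rsum m (fun i => if supp i j then e i / (b i j * unit_cost n (supp i) (b i) q) else 0).

Definition potential n m (supp : nat -> nat -> bool) (b : nat -> nat -> R) (e : nat -> R) q :=
  rsum n q - rsum m (fun i => e i * ln (unit_cost n (supp i) (b i) q)).

Section Market.
Variables (n m : nat) (supp : nat -> nat -> bool) (b : nat -> nat -> R) (e : nat -> R).
Hypothesis HS : forall i, (i < m)%nat -> exists j, (j < n)%nat /\ supp i j = true.
Hypothesis Hb : forall i j, (i < m)%nat -> (j < n)%nat -> supp i j = true -> 0 < b i j.
Hypothesis He : forall i, (i < m)%nat -> 0 < e i.

Local Notation W i := (unit_cost n (supp i) (b i)).
Local Notation xd := (aggregate_demand n m supp b e).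
Local Notation phi := (potential n m supp b e).

Lemma unit_cost_ext i q q' : (forall k, (k < n)%nat -> q k = q' k) -> W i q = W i q'.
Proof. intros H; unfold unit_cost; apply rsum_ext; intros k Hk; rewrite H; auto. Qed.

Lemma aggregate_demand_ext q q' j : (forall k, (k < n)%nat -> q k = q' k) -> xd q j = xd q' j.
Proof. intros H; unfold aggregate_demand; apply rsum_ext; intros i Hi; rewrite (unit_cost_ext i q q'); auto. Qed.

Lemma potential_ext q q' : (forall k, (k < n)%nat -> q k = q' k) -> phi q = phi q'.
Proof.
  intros H; unfold potential. rewrite (rsum_ext n q q') by auto. f_equal.
  apply rsum_ext; intros i Hi; rewrite (unit_cost_ext i q q'); auto.
Qed.

Lemma unit_cost_set_price i q j v : (j < n)%nat ->
  W i (set_price q j v) = W i q + (if supp i j then (v - q j) / b i j else 0).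
Proof.
  intros Hj. unfold unit_cost.
  rewrite (rsum_ext n _ (fun k => if Nat.eqb k j then (if supp i j then v / b i j else 0)
                                  else (if supp i k then q k / b i k else 0))).
  - rewrite rsum_upd by auto. destruct (supp i j); [unfold Rdiv; lra|lra].
  - intros k Hk. unfold set_price. destruct (Nat.eqb_spec k j); subst; auto.
Qed.

Lemma unit_cost_pos_market i q : (i < m)%nat -> (forall k, (k < n)%nat -> 0 < q k) -> 0 < W i q.
Proof. intros Hi Hq. exact (unit_cost_pos n (supp i) (b i) (HS i Hi) (fun j Hj => Hb i j Hi Hj) q Hq). Qed.

Lemma cost_share_bounds i q j : (i < m)%nat -> (j < n)%nat -> supp i j = true ->
  (forall k, (k < n)%nat -> 0 < q k) -> 0 < cost_share n (supp i) (b i) q j <= 1.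
Proof.
  intros Hi Hj HSj Hq. unfold cost_share.
  assert (HW := unit_cost_pos_market i q Hi Hq). assert (Hbj := Hb i j Hi Hj HSj).
  assert (q j / b i j <= W i q).
  { unfold unit_cost.
    replace (q j / b i j) with ((fun k => if supp i k then q k / b i k else 0) j) by (simpl; rewrite HSj; auto).
    apply (rsum_term_le n (fun k => if supp i k then q k / b i k else 0) j); auto. intros k Hk. destruct (supp i k) eqn:E; [|lra].
    apply Rlt_le, Rdiv_lt_0_compat; auto. }
  assert (Hqj := Hq j Hj).
  split; [apply Rdiv_lt_0_compat; auto; apply Rmult_lt_0_compat; auto|].
  replace (q j / (b i j * W i q)) with ((q j / b i j) / W i q) by (field; lra).
  apply Rmult_le_reg_r with (W i q); auto. unfold Rdiv. rewrite Rmult_assoc, Rinv_l by lra.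
  unfold Rdiv in H; lra.
Qed.

Lemma cost_shares_sum1 i q : (i < m)%nat -> (forall k, (k < n)%nat -> 0 < q k) ->
  rsum n (fun j => if supp i j then cost_share n (supp i) (b i) q j else 0) = 1.
Proof.
  intros Hi Hq. assert (HW := unit_cost_pos_market i q Hi Hq).
  transitivity (W i q * / W i q); [|field; lra].
  unfold unit_cost at 1. rewrite <- rsum_scal_r. apply rsum_ext. intros j Hj.
  unfold cost_share. destruct (supp i j) eqn:E; [|ring].
  field. split; [lra|]. apply Rgt_not_eq, Hb; auto.
Qed.

Lemma spending_eq q j :
  q j * xd q j = rsum m (fun i => if supp i j then e i * cost_share n (supp i) (b i) q j else 0).
Proof.
  unfold aggregate_demand. rewrite <- rsum_scal. apply rsum_ext. intros i Hi.
  destruct (supp i j); [|lra]. unfold cost_share, Rdiv. ring.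
Qed.

Lemma aggregate_demand_nonneg q j : (j < n)%nat -> (forall k, (k < n)%nat -> 0 < q k) -> 0 <= xd q j.
Proof.
  intros Hj Hq. apply rsum_nonneg. intros i Hi. destruct (supp i j) eqn:E; [|lra].
  apply Rlt_le, Rdiv_lt_0_compat; auto. apply Rmult_lt_0_compat; auto. apply unit_cost_pos_market; auto.
Qed.

Lemma spending_le_budgets q j : (j < n)%nat -> (forall k, (k < n)%nat -> 0 < q k) ->
  q j * xd q j <= rsum m e.
Proof.
  intros Hj Hq. rewrite spending_eq. apply rsum_le. intros i Hi. destruct (supp i j) eqn:E.
  - pose proof (cost_share_bounds i q j Hi Hj E Hq). pose proof (He i Hi). nra.
  - apply Rlt_le; auto.
Qed.

Lemma potential_set_price_le q j a : (forall k, (k < n)%nat -> 0 < q k) -> (j < n)%nat ->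
  -1/23 <= a <= 1/23 ->
  phi (set_price q j (q j * (1 + a))) - phi q <=
   - a * q j * (xd q j - 1) + 23/22 * (a*a) * q j * xd q j.
Proof.
  intros Hq Hj Ha. unfold potential.
  rewrite (rsum_ext n (set_price q j (q j * (1+a))) (fun h => if Nat.eqb h j then q j * (1+a) else q h)) by auto.
  rewrite rsum_upd by auto.
  assert (Hln : forall i, (i < m)%nat ->
     (if supp i j then e i * (a * cost_share n (supp i) (b i) q j)
                       - e i * (23/22 * (a*a)) * cost_share n (supp i) (b i) q j else 0)
     <= e i * ln (W i (set_price q j (q j * (1 + a)))) - e i * ln (W i q)).
  { intros i Hi. rewrite unit_cost_set_price by auto.
    assert (HW := unit_cost_pos_market i q Hi Hq).
    destruct (supp i j) eqn:E; [|rewrite Rplus_0_r; lra].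
    pose proof (cost_share_bounds i q j Hi Hj E Hq) as [Hw0 Hw1].
    set (w := cost_share n (supp i) (b i) q j) in *.
    assert (W i q + (q j * (1 + a) - q j) / b i j = W i q * (1 + a * w)).
    { unfold w, cost_share. field. split; [lra|]. apply Rgt_not_eq, Hb; auto. }
    rewrite H, ln_mult by nra.
    assert (-1/23 <= a * w) by nra.
    pose proof (ln_1p_ge (a*w) H0). pose proof (He i Hi).
    assert ((a*w)*(a*w) <= (a*a) * w) by nra.
    nra. }
  pose proof (rsum_le m _ _ Hln) as Hs. rewrite rsum_minus in Hs.
  assert (rsum m (fun i => if supp i j then e i * (a * cost_share n (supp i) (b i) q j)
             - e i * (23 / 22 * (a * a)) * cost_share n (supp i) (b i) q j else 0)
    = (a - 23/22*(a*a)) * (q j * xd q j)).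
  { rewrite spending_eq, <- rsum_scal. apply rsum_ext. intros i Hi. destruct (supp i j); ring. }
  lra.
Qed.

Lemma unit_cost_le_total i q : (i < m)%nat -> (forall k, (k < n)%nat -> 0 < q k) ->
  W i q <= rsum n q * rsum n (fun k => if supp i k then / b i k else 0).
Proof.
  intros Hi Hq. unfold unit_cost. rewrite <- rsum_scal. apply rsum_le. intros k Hk.
  destruct (supp i k) eqn:E; [|lra].
  assert (q k <= rsum n q) by (apply (rsum_term_le n q k); auto; intros; apply Rlt_le; auto).
  assert (0 < / b i k) by (apply Rinv_0_lt_compat, Hb; auto). unfold Rdiv. nra.
Qed.

(* Each [ln unit_cost] grows at most linearly in the prices, with slope small enough to be
   absorbed by half of [rsum n q]. *)
Lemma potential_bounded_below :
  exists K, forall q, (forall k, (k < n)%nat -> 0 < q k) -> K <= phi q.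
Proof.
  set (beta := rsum m (fun i => rsum n (fun k => if supp i k then / b i k else 0)) + 1).
  set (Em := rsum m e + 1).
  assert (HE0 : 0 <= rsum m e) by (apply rsum_nonneg; intros; apply Rlt_le; auto).
  assert (Hbi : forall i, (i < m)%nat -> 0 <= rsum n (fun k => if supp i k then / b i k else 0)).
  { intros i Hi. apply rsum_nonneg. intros k Hk. destruct (supp i k) eqn:E; [|lra].
    apply Rlt_le, Rinv_0_lt_compat, Hb; auto. }
  assert (Hbeta : 1 <= beta).
  { assert (0 <= rsum m (fun i => rsum n (fun k => if supp i k then / b i k else 0))) by (apply rsum_nonneg; auto).
    unfold beta; lra. }
  set (c := 2 * Em * beta).
  assert (Hc : 0 < c) by (unfold c, Em; nra).
  exists (- (rsum m e * Rabs (ln c - 1))).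
  intros q Hq.
  set (sq := rsum n q).
  assert (Hsq : 0 <= sq) by (apply rsum_nonneg; intros; apply Rlt_le; auto).
  assert (Hterm : forall i, (i < m)%nat -> e i * ln (W i q) <= e i * sq / (2*Em) + e i * Rabs (ln c - 1)).
  { intros i Hi. assert (HW := unit_cost_pos_market i q Hi Hq).
    assert (HWle : W i q <= sq * beta).
    { pose proof (unit_cost_le_total i q Hi Hq) as HW1. fold sq in HW1.
      assert (rsum n (fun k => if supp i k then / b i k else 0) <= beta - 1).
      { unfold beta. ring_simplify.
        apply (rsum_term_le m (fun i => rsum n (fun k => if supp i k then / b i k else 0)) i); auto. }
      nra. }
    assert (ln (W i q) = ln (W i q / c) + ln c).
    { unfold Rdiv. rewrite ln_mult, ln_Rinv by (try apply Rinv_0_lt_compat; lra). ring. }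
    pose proof (ln_le_sub1 (W i q / c) ltac:(apply Rdiv_lt_0_compat; lra)).
    assert (W i q / c <= sq / (2*Em)).
    { unfold c, Rdiv. rewrite Rinv_mult. apply Rmult_le_reg_r with beta; [lra|].
      assert (0 < Em) by (unfold Em; lra).
      replace (W i q * (/ (2 * Em) * / beta) * beta) with (W i q * / (2*Em)) by (field; lra).
      assert (0 < / (2*Em)) by (apply Rinv_0_lt_compat; lra). nra. }
    assert (Hei := He i Hi). pose proof (Rle_abs (ln c - 1)).
    rewrite H. unfold Rdiv in *. nra. }
  pose proof (rsum_le m _ _ Hterm). rewrite rsum_plus, rsum_scal_r in H.
  replace (rsum m (fun i => e i * sq / (2*Em))) with (rsum m e * (sq / (2*Em))) in H
    by (rewrite <- rsum_scal_r; apply rsum_ext; intros; unfold Rdiv; ring).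
  assert (rsum m e * (sq / (2*Em)) <= sq / 2).
  { unfold Em. apply Rmult_le_reg_r with (2 * (rsum m e + 1)); [lra|].
    field_simplify; [|lra]. nra. }
  unfold potential. fold sq. nra.
Qed.

End Market.

Definition indR (P : Prop) (x : R) : R := if excluded_middle_informative P then x else 0.

Lemma indR_T (P : Prop) x : P -> indR P x = x.
Proof. intros H; unfold indR; destruct excluded_middle_informative; tauto. Qed.

Lemma indR_F (P : Prop) x : ~ P -> indR P x = 0.
Proof. intros H; unfold indR; destruct excluded_middle_informative; tauto. Qed.

Lemma indR_nonneg (P : Prop) x : 0 <= x -> 0 <= indR P x.
Proof. unfold indR; destruct excluded_middle_informative; lra. Qed.

Lemma indR_scal (P : Prop) c x : c * indR P x = indR P (c * x).
Proof. unfold indR; destruct excluded_middle_informative; lra. Qed.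

Lemma indR_le (P : Prop) x y : (P -> x <= y) -> indR P x <= indR P y.
Proof. intros H. unfold indR; destruct excluded_middle_informative; auto; lra. Qed.

Lemma indR_le_impl (P Q : Prop) x y : (P -> Q) -> 0 <= y -> (P -> x <= y) -> indR P x <= indR Q y.
Proof. intros H Hy Hxy. unfold indR; do 2 destruct excluded_middle_informative; try tauto; lra. Qed.

Definition prev_time (u : nat -> R) k := match k with O => 0 | S k' => u k' end.

Section UpdateTimes.
Variable u : nat -> R.
Hypothesis u0_pos : 0 < u 0%nat.
Hypothesis u0_le1 : u 0%nat <= 1.
Hypothesis u_incr : forall k, u k < u (S k).
Hypothesis u_gap : forall k, u (S k) - u k <= 1.

Lemma u_lt k1 k2 : (k1 < k2)%nat -> u k1 < u k2.
Proof.
  intros Hk. induction k2; [lia|]. destruct (Nat.eq_dec k1 k2); [subst; auto|].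
  specialize (IHk2 ltac:(lia)). specialize (u_incr k2). lra.
Qed.

Lemma u_le k1 k2 : (k1 <= k2)%nat -> u k1 <= u k2.
Proof. intros Hk. destruct (Nat.eq_dec k1 k2); [subst; lra|]. apply Rlt_le, u_lt; lia. Qed.

Lemma u_pos k : 0 < u k.
Proof. pose proof (u_le 0 k ltac:(lia)). lra. Qed.

Lemma count_below_exists : (forall T, exists k, T < u k) ->
  forall t, exists N, forall k, u k < t <-> (k < N)%nat.
Proof.
  intros Hd t. destruct (Hd t) as [k0 Hk0].
  assert (exists N, (forall k, (k < N)%nat -> u k < t) /\ t <= u N) as [N [H1 H2]].
  { clear Hd. apply Rlt_le in Hk0. induction k0.
    - exists 0%nat. split; [intros; lia| lra].
    - destruct (Rlt_dec (u k0) t).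
      + exists (S k0). split; [|lra]. intros k Hk. destruct (Nat.eq_dec k k0); [subst; auto|].
        pose proof (u_lt k k0 ltac:(lia)). lra.
      + apply IHk0. lra. }
  exists N. intros k. split; auto.
  intros Hk. destruct (Nat.lt_ge_cases k N); auto. pose proof (u_le N k H). lra.
Qed.

Lemma elapsed_pos k : 0 < u k - prev_time u k.
Proof. destruct k; simpl; [lra|]. specialize (u_incr k); lra. Qed.

Lemma elapsed_le1 k : u k - prev_time u k <= 1.
Proof. destruct k; simpl; [lra|]. auto. Qed.

(* The intervals (prev_time u k, u k] tile (0, +oo) and have length at most 1. *)
Lemma elapsed_sum_window s1 s2 N :
  rsum N (fun k => indR (s1 <= u k < s2) (u k - prev_time u k)) <= Rmax 0 (s2 - s1 + 1).
Proof.
  set (f := fun N => match N with O => 0 | S N' => Rmax 0 (Rmin (u N') s2 - s1 + 1) end).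
  assert (Hf : forall N, rsum N (fun k => indR (s1 <= u k < s2) (u k - prev_time u k)) <= f N).
  { induction N0; [simpl; lra|].
    simpl rsum. destruct (excluded_middle_informative (s1 <= u N0 < s2)) as [Hw|Hw].
    - rewrite indR_T by auto. destruct N0 as [|N'].
      + simpl. unfold Rmin, Rmax. repeat destruct Rle_dec; lra.
      + simpl in IHN0 |- *. pose proof (u_incr N'). pose proof (u_gap N').
        unfold Rmin, Rmax in *. repeat destruct Rle_dec; lra.
    - rewrite indR_F, Rplus_0_r by auto. eapply Rle_trans; [apply IHN0|].
      destruct N0 as [|N']; simpl; [unfold Rmax; destruct Rle_dec; lra|].
      pose proof (u_incr N'). unfold Rmin, Rmax; repeat destruct Rle_dec; lra. }
  eapply Rle_trans; [apply Hf|]. destruct N; simpl; [unfold Rmax; destruct Rle_dec; lra|].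
  unfold Rmin, Rmax; repeat destruct Rle_dec; lra.
Qed.

Lemma elapsed_sum_covering s N :
  rsum N (fun k => indR (prev_time u k < s < u k) (u k - prev_time u k)) <= 1.
Proof.
  assert (Hz : forall N, (forall k, (k < N)%nat -> u k <= s) ->
            rsum N (fun k => indR (prev_time u k < s < u k) (u k - prev_time u k)) = 0).
  { intros N' H. rewrite (rsum_ext N' _ (fun _ => 0)); [apply rsum_zero|].
    intros k Hk. apply indR_F. specialize (H k Hk); lra. }
  induction N; [simpl; lra|].
  simpl rsum. destruct (excluded_middle_informative (prev_time u N < s < u N)) as [Hw|Hw].
  - rewrite indR_T by auto. rewrite Hz.
    + pose proof (elapsed_le1 N). lra.
    + intros k Hk. destruct N; [lia|]. simpl in Hw. pose proof (u_le k N ltac:(lia)). lra.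
  - rewrite indR_F by auto. lra.
Qed.

End UpdateTimes.

Section Telescoping.
Variables pi a : nat -> R.
Hypothesis pi_step : forall k, pi (S k) = pi k * (1 + a k).

Lemma telescope_sum N1 N2 : (N1 <= N2)%nat ->
  pi N2 - pi N1 = rsum N2 (fun k => if Nat.leb N1 k then pi k * a k else 0).
Proof.
  intros Hle. induction N2.
  - assert (N1 = 0%nat) by lia. subst. simpl. lra.
  - destruct (Nat.eq_dec N1 (S N2)).
    + subst. cbn [rsum]. rewrite (rsum_ext N2 _ (fun _ => 0)).
      * rewrite rsum_zero. destruct (Nat.leb_spec (S N2) N2); [lia|]. lra.
      * intros k Hk. destruct (Nat.leb_spec (S N2) k); auto; lia.
    + cbn [rsum]. rewrite <- IHN2 by lia. destruct (Nat.leb_spec N1 N2); [|lia]. rewrite pi_step. lra.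
Qed.

Lemma telescope_prod_bounds N1 d : 0 < pi N1 ->
  rsum (N1 + d) (fun k => if Nat.leb N1 k then Rabs (a k) else 0) <= 1/2 ->
  pi N1 * (1 - rsum (N1 + d) (fun k => if Nat.leb N1 k then Rabs (a k) else 0)) <= pi (N1 + d)%nat /\
  pi (N1 + d)%nat * (1 - rsum (N1 + d) (fun k => if Nat.leb N1 k then Rabs (a k) else 0)) <= pi N1.
Proof.
  intros Hp. induction d; intros HA.
  - rewrite Nat.add_0_r in *. rewrite (rsum_ext N1 _ (fun _ => 0)); [rewrite rsum_zero; lra|].
    intros k Hk. destruct (Nat.leb_spec N1 k); auto; lia.
  - rewrite Nat.add_succ_r in *. cbn [rsum] in *. destruct (Nat.leb_spec N1 (N1 + d)); [|lia].
    set (A := rsum (N1 + d) (fun k => if Nat.leb N1 k then Rabs (a k) else 0)) in *.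
    assert (0 <= A) by (apply rsum_nonneg; intros; destruct Nat.leb; [apply Rabs_pos|lra]).
    pose proof (Rabs_pos (a (N1+d)%nat)).
    destruct (IHd ltac:(lra)) as [I1 I2].
    rewrite pi_step. set (x := a (N1 + d)%nat) in *. set (P := pi (N1+d)%nat) in *.
    assert (-Rabs x <= x) by (pose proof (Rabs_pos x); unfold Rabs in *; destruct Rcase_abs; lra).
    assert (x <= Rabs x) by apply RRle_abs.
    assert (0 < P) by nra.
    set (t := Rabs x) in *. set (pN := pi N1) in *.
    split.
    + assert (P * (1 - t) <= P * (1 + x)) by (apply Rmult_le_compat_l; lra).
      assert (pN * (1 - A) * (1 - t) <= P * (1 - t)) by (apply Rmult_le_compat_r; lra).
      assert (0 <= pN * A * t) by (apply Rmult_le_pos; [apply Rmult_le_pos|]; lra).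
      nra.
    + assert ((1 + x) * (1 - (A + t)) <= 1 - A) by nra.
      assert (P * ((1 + x) * (1 - (A + t))) <= P * (1 - A)) by (apply Rmult_le_compat_l; lra).
      nra.
Qed.

End Telescoping.

Section Tatonnement.
Variables (n m : nat) (supp : nat -> nat -> bool) (b : nat -> nat -> R) (e : nat -> R).
Hypothesis HS : forall i, (i < m)%nat -> exists j, (j < n)%nat /\ supp i j = true.
Hypothesis Hb : forall i j, (i < m)%nat -> (j < n)%nat -> supp i j = true -> 0 < b i j.
Hypothesis He : forall i, (i < m)%nat -> 0 < e i.
Variable X : nat -> (nat -> R) -> nat -> R.
Hypothesis HX : forall p, (forall j, (j < n)%nat -> 0 < p j) ->
  forall i, (i < m)%nat -> leontief_demand n (supp i) (b i) (e i) p (X i p).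
Variable lambda : R.
Hypothesis Hlam0 : 0 < lambda.
Hypothesis Hlam : lambda <= 1/23.
Variable p0 : nat -> R.
Hypothesis Hp0 : forall j, (j < n)%nat -> 0 < p0 j.
Variable u : nat -> nat -> R.
Hypothesis Hu0 : forall j, (j < n)%nat -> 0 < u j 0%nat /\ u j 0%nat <= 1.
Hypothesis Hu_incr : forall j k, (j < n)%nat -> u j k < u j (S k).
Hypothesis Hu_gap : forall j k, (j < n)%nat -> u j (S k) - u j k <= 1.
Hypothesis Hu_discrete : forall j T, (j < n)%nat -> exists k, T < u j k.
Hypothesis Hu_nosim : forall j j' k k', (j < n)%nat -> (j' < n)%nat -> u j k = u j' k' -> j = j'.
Variable tau : nat -> nat -> R.
Hypothesis Htau : forall j k, tau j k = match k with O => 0 | S k' => u j k' end.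
Variables (p : nat -> R -> R) (P : nat -> nat -> R).
Hypothesis Hp_init : forall j t, (j < n)%nat -> 0 <= t -> t <= u j 0%nat -> p j t = p0 j.
Hypothesis Hp_step : forall j k t, (j < n)%nat -> u j k < t -> t <= u j (S k) -> p j t = P j k.
Variable Zt : nat -> nat -> R.
Hypothesis HZt : forall j k, (j < n)%nat ->
  exists t1 t2,
    tau j k < t1 /\ t1 <= u j k /\ tau j k < t2 /\ t2 <= u j k /\
    excess m X (fun g => p g t1) j <= Zt j k /\
    Zt j k <= excess m X (fun g => p g t2) j.
Hypothesis HP : forall j k, (j < n)%nat ->
  P j k = p j (u j k) * (1 + lambda * Rmin (Zt j k) 1 * (u j k - tau j k)).

Local Notation W i := (unit_cost n (supp i) (b i)).
Local Notation share i := (cost_share n (supp i) (b i)).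
Local Notation xd := (aggregate_demand n m supp b e).
Local Notation phi := (potential n m supp b e).
Local Notation W_pos := (unit_cost_pos_market n m supp b HS Hb).
Local Notation share_bounds := (cost_share_bounds n m supp b HS Hb).
Local Notation xd_nonneg := (aggregate_demand_nonneg n m supp b e HS Hb He).

Definition nupd g t : nat := epsilon (inhabits 0%nat) (fun N => forall k, u g k < t <-> (k < N)%nat).

(* Price of good [g] after its first [k] updates. *)
Definition pseq g k := match k with O => p0 g | S k' => P g k' end.

Definition elapsed g k := u g k - tau g k.

Definition zcap g k := Rmin (Zt g k) 1.

Definition rate g k := lambda * zcap g k * elapsed g k.

(* The price vector just before any update at time [t]. *)
Definition state t h := pseq h (nupd h t).

Definition nupd_total t := nsum n (fun g => nupd g t).

Lemma nupd_spec g t k : (g < n)%nat -> (u g k < t <-> (k < nupd g t)%nat).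
Proof.
  intros Hg. unfold nupd. revert k. apply epsilon_spec.
  exact (count_below_exists (u g) (fun k => Hu_incr g k Hg) (fun T => Hu_discrete g T Hg) t).
Qed.

Lemma update_time_pos g k : (g < n)%nat -> 0 < u g k.
Proof. intros Hg. exact (u_pos (u g) (proj1 (Hu0 g Hg)) (fun k => Hu_incr g k Hg) k). Qed.

Lemma nupd_at_update g k : (g < n)%nat -> nupd g (u g k) = k.
Proof.
  intros Hg. apply Nat.le_antisymm.
  - destruct (Nat.le_gt_cases (nupd g (u g k)) k); auto. exfalso.
    assert (u g k < u g k) by (apply nupd_spec; auto). lra.
  - destruct (Nat.le_gt_cases k (nupd g (u g k))); auto.
    destruct k; [lia|]. assert (u g k < u g (S k)) by auto.
    assert (k < nupd g (u g (S k)))%nat by (apply nupd_spec; auto). lia.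
Qed.

Lemma nupd_mono g t1 t2 : (g < n)%nat -> t1 <= t2 -> (nupd g t1 <= nupd g t2)%nat.
Proof.
  intros Hg Ht. destruct (Nat.le_gt_cases (nupd g t1) (nupd g t2)); auto.
  assert (u g (nupd g t2) < t1) by (apply nupd_spec; auto).
  assert (~ (u g (nupd g t2) < t2)) by (rewrite nupd_spec; auto; lia). lra.
Qed.

Lemma tau_eq g k : tau g k = prev_time (u g) k.
Proof. rewrite Htau; destruct k; auto. Qed.

Lemma elapsed_bounds g k : (g < n)%nat -> 0 < elapsed g k <= 1.
Proof.
  intros Hg. unfold elapsed. rewrite tau_eq. split.
  - apply elapsed_pos; [apply Hu0|]; auto.
  - apply elapsed_le1; [apply Hu0|]; auto.
Qed.

Lemma tau_nonneg g k : (g < n)%nat -> 0 <= tau g k.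
Proof. intros Hg. rewrite tau_eq; destruct k; simpl; [lra|apply Rlt_le, update_time_pos; auto]. Qed.

Lemma tau_lt g k : (g < n)%nat -> tau g k < u g k.
Proof. intros Hg. pose proof (elapsed_bounds g k Hg). unfold elapsed in H; lra. Qed.

Lemma nupd_window g k t : (g < n)%nat -> tau g k < t -> t <= u g k -> nupd g t = k.
Proof.
  intros Hg H1 H2. apply Nat.le_antisymm.
  - destruct (Nat.le_gt_cases (nupd g t) k); auto. assert (u g k < t) by (apply nupd_spec; auto). lra.
  - destruct (Nat.le_gt_cases k (nupd g t)); auto. exfalso. destruct k; [lia|].
    rewrite tau_eq in H1; simpl in H1. assert (~ (u g (nupd g t) < t)) by (rewrite nupd_spec; auto; lia).
    pose proof (u_le (u g) (fun k => Hu_incr g k Hg) (nupd g t) k ltac:(lia)). lra.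
Qed.

Lemma price_path_eq g t : (g < n)%nat -> 0 <= t -> p g t = state t g.
Proof.
  intros Hg Ht. unfold state. destruct (nupd g t) as [|k] eqn:E; simpl.
  - apply Hp_init; auto. destruct (Rle_dec t (u g 0%nat)); auto.
    assert (0 < nupd g t)%nat by (apply nupd_spec; auto; lra). lia.
  - apply Hp_step; auto; [apply nupd_spec; auto; lia|].
    destruct (Rle_dec t (u g (S k))); auto.
    assert (S k < nupd g t)%nat by (apply nupd_spec; auto; lra). lia.
Qed.

Lemma state_at_update g k : (g < n)%nat -> state (u g k) g = pseq g k.
Proof. intros Hg. unfold state. rewrite nupd_at_update; auto. Qed.

Lemma state_in_window g k t : (g < n)%nat -> tau g k < t -> t <= u g k -> state t g = pseq g k.
Proof. intros Hg H1 H2. unfold state. rewrite (nupd_window g k t); auto. Qed.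

Lemma pseq_step g k : (g < n)%nat -> pseq g (S k) = pseq g k * (1 + rate g k).
Proof.
  intros Hg. simpl. rewrite HP, price_path_eq, state_at_update by (auto; apply Rlt_le, update_time_pos; auto).
  unfold rate, zcap, elapsed. ring.
Qed.

Lemma excess_eq t j : 0 <= t -> (j < n)%nat -> (forall h, (h < n)%nat -> 0 < state t h) ->
  excess m X (fun g => p g t) j = xd (state t) j - 1.
Proof.
  intros Ht Hj Hpos. unfold excess. f_equal.
  assert (Hq : forall h, (h < n)%nat -> 0 < p h t) by (intros h Hh; rewrite price_path_eq; auto).
  rewrite (aggregate_demand_ext n m supp b e (state t) (fun g => p g t))
    by (intros k Hk; rewrite price_path_eq; auto).
  unfold aggregate_demand. apply rsum_ext. intros i Hi.
  apply (leontief_demand_eq n (supp i) (b i) (HS i Hi) (fun j Hj => Hb i j Hi Hj)); auto.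
Qed.

Lemma nupd_total_mono t1 t2 : t1 <= t2 -> (nupd_total t1 <= nupd_total t2)%nat.
Proof. intros Ht. apply nsum_le. intros; apply nupd_mono; auto. Qed.

Lemma nupd_total_after_update h k t : (h < n)%nat -> u h k < t ->
  (nupd_total (u h k) < nupd_total t)%nat.
Proof.
  intros Hh Ht. apply (nsum_lt n _ _ h); auto.
  - intros; apply nupd_mono; auto; lra.
  - rewrite nupd_at_update by auto. apply nupd_spec; auto.
Qed.

(* Strong induction on the number of updates: sampled demands are nonnegative, so
   [rate >= -1/23] and prices stay positive. *)
Lemma state_pos t : 0 <= t -> forall h, (h < n)%nat -> 0 < state t h.
Proof.
  intros Ht. remember (S (nupd_total t)) as K eqn:HK. assert (HC : (nupd_total t < K)%nat) by lia.
  clear HK. revert t Ht HC. induction K; intros t Ht HC h Hh; [lia|].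
  unfold state. destruct (nupd h t) as [|k] eqn:E; [simpl; auto|].
  assert (Hk : u h k < t) by (apply nupd_spec; auto; lia).
  rewrite pseq_step by auto.
  assert (Hpk : 0 < pseq h k).
  { rewrite <- state_at_update by auto. apply IHK; auto.
    - apply Rlt_le, update_time_pos; auto.
    - pose proof (nupd_total_after_update h k t Hh Hk). lia. }
  destruct (HZt h k Hh) as [t1 [t2 [H1 [H2 [H3 [H4 [H5 H6]]]]]]].
  pose proof (tau_nonneg h k Hh).
  assert (Hp1 : forall h', (h' < n)%nat -> 0 < state t1 h').
  { apply IHK; [lra|]. pose proof (nupd_total_mono t1 (u h k) H2).
    pose proof (nupd_total_after_update h k t Hh Hk). lia. }
  rewrite excess_eq in H5 by (auto; lra).
  pose proof (xd_nonneg (state t1) h Hh Hp1).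
  assert (-1 <= zcap h k) by (unfold zcap, Rmin; destruct Rle_dec; lra).
  assert (zcap h k <= 1) by (unfold zcap; apply Rmin_r).
  pose proof (elapsed_bounds h k Hh).
  assert (-1/23 <= rate h k).
  { unfold rate. assert (- elapsed h k <= zcap h k * elapsed h k) by nra. nra. }
  apply Rmult_lt_0_compat; lra.
Qed.

Lemma state_at_update_pos g k : (g < n)%nat -> forall h, (h < n)%nat -> 0 < state (u g k) h.
Proof. intros Hg. apply state_pos, Rlt_le, update_time_pos; auto. Qed.

Lemma pseq_pos g k : (g < n)%nat -> 0 < pseq g k.
Proof. intros Hg. rewrite <- state_at_update by auto. apply state_at_update_pos; auto. Qed.

Lemma zcap_bounds g k : (g < n)%nat -> -1 <= zcap g k <= 1.
Proof.
  intros Hg. destruct (HZt g k Hg) as [t1 [t2 [H1 [H2 [H3 [H4 [H5 H6]]]]]]].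
  pose proof (tau_nonneg g k Hg).
  rewrite excess_eq in H5 by (auto; try lra; apply state_pos; lra).
  pose proof (xd_nonneg (state t1) g Hg ltac:(apply state_pos; lra)).
  split; [unfold zcap, Rmin; destruct Rle_dec; lra| unfold zcap; apply Rmin_r].
Qed.

Lemma rate_abs_le g k : (g < n)%nat -> Rabs (rate g k) <= lambda * elapsed g k.
Proof.
  intros Hg. unfold rate. pose proof (zcap_bounds g k Hg). pose proof (elapsed_bounds g k Hg).
  rewrite Rabs_mult, Rabs_mult, (Rabs_right lambda), (Rabs_right (elapsed g k)) by lra.
  assert (Rabs (zcap g k) <= 1) by (apply Rabs_le; lra).
  rewrite Rmult_assoc; apply Rmult_le_compat_l; [lra|]. pose proof (Rabs_pos (zcap g k)). nra.
Qed.

Definition price_bound := (rsum n p0 + rsum m e) * (1 + lambda).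

(* Once a good's spending exceeds all budgets its demand is below supply, so its price
   can only rise while below [rsum m e]. *)
Lemma pseq_bounded g k : (g < n)%nat -> pseq g k <= price_bound.
Proof.
  intros Hg. unfold price_bound. set (Esum := rsum m e).
  assert (HE0 : 0 <= Esum) by (apply rsum_nonneg; intros; apply Rlt_le; auto).
  assert (Hp0s : p0 g <= rsum n p0) by (apply (rsum_term_le n p0 g); auto; intros; apply Rlt_le; auto).
  assert (0 <= rsum n p0) by (apply rsum_nonneg; intros; apply Rlt_le; auto).
  induction k; [simpl; nra|].
  rewrite pseq_step by auto.
  destruct (HZt g k Hg) as [t1 [t2 [H1 [H2 [H3 [H4 [H5 H6]]]]]]].
  pose proof (tau_nonneg g k Hg).
  rewrite excess_eq in H6 by (auto; try lra; apply state_pos; lra).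
  pose proof (spending_le_budgets n m supp b e HS Hb He (state t2) g Hg ltac:(apply state_pos; lra)) as Hxu.
  rewrite (state_in_window g k t2) in Hxu by auto. fold Esum in Hxu.
  pose proof (pseq_pos g k Hg). pose proof (elapsed_bounds g k Hg). pose proof (zcap_bounds g k Hg).
  unfold rate. destruct (Rle_dec Esum (pseq g k)).
  - assert (zcap g k <= 0).
    { assert (Zt g k <= 0).
      { assert (pseq g k * (Zt g k + 1) <= pseq g k * 1) by (apply Rmult_le_compat_l; nra). nra. }
      unfold zcap. eapply Rle_trans; [apply Rmin_l|]; auto. }
    assert (zcap g k * elapsed g k <= 0) by nra.
    assert (lambda * zcap g k * elapsed g k <= 0) by (rewrite Rmult_assoc; nra).
    assert (pseq g k * (lambda * zcap g k * elapsed g k) <= 0) by nra. nra.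
  - assert (zcap g k * elapsed g k <= 1) by nra.
    assert (lambda * zcap g k * elapsed g k <= lambda) by (rewrite Rmult_assoc; nra).
    assert (pseq g k * (1 + lambda * zcap g k * elapsed g k) <= pseq g k * (1 + lambda))
      by (apply Rmult_le_compat_l; lra).
    assert (pseq g k * (1 + lambda) <= Esum * (1 + lambda)) by (apply Rmult_le_compat_r; lra).
    nra.
Qed.

Lemma elapsed_sum_window_le g s1 s2 K : (g < n)%nat ->
  rsum K (fun k => indR (s1 <= u g k < s2) (elapsed g k)) <= Rmax 0 (s2 - s1 + 1).
Proof.
  intros Hg. rewrite (rsum_ext K _ (fun k => indR (s1 <= u g k < s2) (u g k - prev_time (u g) k))).
  - apply elapsed_sum_window; try apply Hu0; auto.
  - intros k Hk; unfold elapsed; rewrite tau_eq; auto.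
Qed.

Lemma elapsed_sum_covering_le g s K : (g < n)%nat ->
  rsum K (fun k => indR (tau g k < s < u g k) (elapsed g k)) <= 1.
Proof.
  intros Hg. rewrite (rsum_ext K _ (fun k => indR (prev_time (u g) k < s < u g k) (u g k - prev_time (u g) k))).
  - apply elapsed_sum_covering; try apply Hu0; auto.
  - intros k Hk; unfold elapsed; rewrite tau_eq; auto.
Qed.

(* Within one time unit each price sees updates of total length at most 2, so by
   [telescope_prod_bounds] it moves by a factor of at most [1 - 2/23]. *)
Lemma state_ratio g s1 s2 : (g < n)%nat -> 0 <= s1 <= s2 -> s2 <= s1 + 1 ->
  21/23 * state s1 g <= state s2 g /\ state s2 g * (21/23) <= state s1 g.
Proof.
  intros Hg Hs1 Hs2. unfold state.
  set (N1 := nupd g s1). set (N2 := nupd g s2).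
  assert (HN12 : (N1 <= N2)%nat) by (apply nupd_mono; auto; lra).
  replace N2 with (N1 + (N2 - N1))%nat by lia.
  set (A := rsum (N1 + (N2 - N1)) (fun k => if Nat.leb N1 k then Rabs (rate g k) else 0)).
  assert (HA : A <= 2/23).
  { unfold A. replace (N1 + (N2 - N1))%nat with N2 by lia.
    eapply Rle_trans; [apply (rsum_le N2 _ (fun k => lambda * indR (s1 <= u g k < s2) (elapsed g k)))|].
    - intros k Hk. destruct (Nat.leb_spec N1 k).
      + rewrite indR_T; [apply rate_abs_le; auto|]. split; [|apply nupd_spec; auto].
        destruct (Rlt_dec (u g k) s1); [|lra]. assert (k < N1)%nat by (apply nupd_spec; auto). lia.
      + apply Rmult_le_pos; [lra|]. apply indR_nonneg. apply Rlt_le, elapsed_bounds; auto.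
    - rewrite rsum_scal. pose proof (elapsed_sum_window_le g s1 s2 N2 Hg).
      assert (Rmax 0 (s2 - s1 + 1) <= 2) by (unfold Rmax; destruct Rle_dec; lra).
      assert (0 <= rsum N2 (fun k => indR (s1 <= u g k < s2) (elapsed g k))).
      { apply rsum_nonneg; intros; apply indR_nonneg; apply Rlt_le, elapsed_bounds; auto. }
      nra. }
  assert (0 <= A) by (apply rsum_nonneg; intros; destruct Nat.leb; [apply Rabs_pos|lra]).
  destruct (telescope_prod_bounds (pseq g) (rate g) (fun k => pseq_step g k Hg) N1 (N2 - N1)
              (pseq_pos g N1 Hg) ltac:(fold A; lra)) as [T1 T2].
  fold A in T1, T2. pose proof (pseq_pos g N1 Hg). pose proof (pseq_pos g (N1 + (N2 - N1))%nat Hg).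
  split; nra.
Qed.

Lemma unit_cost_ratio i s1 s2 : (i < m)%nat -> 0 <= s1 <= s2 -> s2 <= s1 + 1 ->
  21/23 * W i (state s1) <= W i (state s2) /\ W i (state s2) * (21/23) <= W i (state s1).
Proof.
  intros Hi Hs1 Hs2. unfold unit_cost. split.
  - rewrite <- rsum_scal. apply rsum_le. intros k Hk. destruct (supp i k) eqn:E; [|lra].
    pose proof (state_ratio k s1 s2 Hk Hs1 Hs2). pose proof (Hb i k Hi Hk E).
    unfold Rdiv. assert (0 < / b i k) by (apply Rinv_0_lt_compat; auto). nra.
  - rewrite <- rsum_scal_r. apply rsum_le. intros k Hk. destruct (supp i k) eqn:E; [|lra].
    pose proof (state_ratio k s1 s2 Hk Hs1 Hs2). pose proof (Hb i k Hi Hk E).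
    unfold Rdiv. assert (0 < / b i k) by (apply Rinv_0_lt_compat; auto). nra.
Qed.

Definition potential_jump g k :=
  phi (set_price (state (u g k)) g (pseq g (S k))) - phi (state (u g k)).

Lemma last_update_before T : (0 < nupd_total T)%nat ->
  exists g0 k0, (g0 < n)%nat /\ nupd g0 T = S k0 /\
    forall g, (g < n)%nat -> g <> g0 -> nupd g (u g0 k0) = nupd g T.
Proof.
  intros HC.
  destruct (argmax_exists n (fun g => Nat.ltb 0 (nupd g T)) (fun g => u g (nupd g T - 1)%nat))
    as [g0 [Hg0 [HP0 Hmax]]].
  { destruct (classic (exists g, (g < n)%nat /\ Nat.ltb 0 (nupd g T) = true)) as [?|Hno]; auto.
    exfalso. assert (nupd_total T = 0%nat); [|lia].
    unfold nupd_total. transitivity (nsum n (fun _ => 0%nat)).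
    - apply nsum_ext. intros i Hi. destruct (nupd i T) eqn:E; auto.
      exfalso; apply Hno; exists i; split; auto. rewrite E; auto.
    - clear. induction n; simpl; lia. }
  apply Nat.ltb_lt in HP0. exists g0, (nupd g0 T - 1)%nat. split; [auto|split; [lia|]].
  set (k0 := (nupd g0 T - 1)%nat) in *.
  assert (HvT : u g0 k0 < T) by (apply nupd_spec; auto; lia).
  intros g Hg Hne. apply Nat.le_antisymm; [apply nupd_mono; auto; lra|].
  destruct (Nat.le_gt_cases (nupd g T) (nupd g (u g0 k0))) as [?|Hlt]; auto. exfalso.
  assert (Hm := Hmax g Hg ltac:(apply Nat.ltb_lt; lia)). simpl in Hm. fold k0 in Hm.
  assert (~ (u g (nupd g T - 1)%nat < u g0 k0)) by (rewrite nupd_spec; auto; lia).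
  apply Hne. apply (Hu_nosim g g0 (nupd g T - 1)%nat k0); auto. lra.
Qed.

Lemma potential_telescope T : 0 < T ->
  phi (state T) - phi p0 = rsum n (fun g => rsum (nupd g T) (potential_jump g)).
Proof.
  remember (nupd_total T) as K eqn:HC. revert T HC. induction K; intros T HC HT.
  - assert (Hz : forall g, (g < n)%nat -> nupd g T = 0%nat)
      by (intros; apply (nsum_eq0 n (fun g => nupd g T)); auto).
    rewrite (potential_ext n m supp b e (state T) p0), (rsum_ext n _ (fun _ => 0)), rsum_zero; [lra| |].
    + intros g Hg. rewrite Hz; auto.
    + intros h Hh. unfold state. rewrite Hz; auto.
  - destruct (last_update_before T ltac:(lia)) as [g0 [k0 [Hg0 [Hk0 Hoth]]]].
    set (v := u g0 k0) in *.
    assert (Hv0 : 0 < v) by (apply update_time_pos; auto).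
    assert (Hg0v : nupd g0 v = k0) by (apply nupd_at_update; auto).
    assert (HCv : nupd_total v = K).
    { assert (nupd_total T = S (nupd_total v)); [|lia]. unfold nupd_total. apply (nsum_upd n _ _ g0); auto.
      - intros i Hi Hne; rewrite Hoth; auto.
      - lia. }
    assert (phi (state T) = phi (set_price (state v) g0 (pseq g0 (S k0)))).
    { apply potential_ext. intros h Hh. unfold set_price, state. destruct (Nat.eqb_spec h g0) as [->|Hne].
      - rewrite Hk0; auto.
      - rewrite Hoth; auto. }
    rewrite H, (rsum_ext n (fun g => rsum (nupd g T) (potential_jump g))
      (fun g => if Nat.eqb g g0 then rsum (S k0) (potential_jump g0) else rsum (nupd g v) (potential_jump g))).
    + rewrite rsum_upd, Hg0v by auto. simpl rsum.
      pose proof (IHK v (eq_sym HCv) Hv0). 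
      assert (potential_jump g0 k0 = phi (set_price (state v) g0 (pseq g0 (S k0))) - phi (state v))
        by reflexivity.
      lra.
    + intros g Hg. destruct (Nat.eqb_spec g g0) as [->|Hne]; [rewrite Hk0; auto|]. rewrite Hoth; auto.
Qed.

Lemma state_change_le h t' s T : (h < n)%nat -> 0 <= t' <= s -> s <= T ->
  Rabs (state s h - state t' h) <=
  rsum (nupd h T) (fun k' => indR (t' <= u h k' < s) (pseq h k' * Rabs (rate h k'))).
Proof.
  intros Hh Ht Hs. unfold state.
  assert (H12 : (nupd h t' <= nupd h s)%nat) by (apply nupd_mono; auto; lra).
  assert (H2T : (nupd h s <= nupd h T)%nat) by (apply nupd_mono; auto; lra).
  rewrite (telescope_sum (pseq h) (rate h) (fun k => pseq_step h k Hh) _ _ H12).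
  rewrite (rsum_extend _ _ _ H2T).
  eapply Rle_trans; [apply Rabs_rsum_le|]. apply rsum_le. intros k' Hk'.
  assert (0 <= pseq h k' * Rabs (rate h k'))
    by (apply Rmult_le_pos; [apply Rlt_le, pseq_pos; auto|apply Rabs_pos]).
  destruct (Nat.ltb_spec k' (nupd h s)); destruct (Nat.leb_spec (nupd h t') k');
    try (rewrite Rabs_R0; apply indR_nonneg; auto).
  rewrite indR_T, Rabs_mult, (Rabs_right (pseq h k')); [lra| apply Rle_ge, Rlt_le, pseq_pos; auto|].
  split; [|apply nupd_spec; auto].
  destruct (Rle_dec t' (u h k')); auto. assert (k' < nupd h t')%nat by (apply nupd_spec; auto; lra). lia.
Qed.

Lemma unit_cost_change_le i t' s T : (i < m)%nat -> 0 <= t' <= s -> s <= T ->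
  Rabs (W i (state s) - W i (state t')) <=
  rsum n (fun h => if supp i h then / b i h *
    rsum (nupd h T) (fun k' => indR (t' <= u h k' < s) (pseq h k' * Rabs (rate h k'))) else 0).
Proof.
  intros Hi Ht Hs. unfold unit_cost. rewrite <- rsum_minus. eapply Rle_trans; [apply Rabs_rsum_le|].
  apply rsum_le. intros h Hh. destruct (supp i h) eqn:E.
  - assert (0 < / b i h) by (apply Rinv_0_lt_compat, Hb; auto).
    replace (state s h / b i h - state t' h / b i h) with (/ b i h * (state s h - state t' h)) by (unfold Rdiv; ring).
    rewrite Rabs_mult, Rabs_right by lra. apply Rmult_le_compat_l; [lra|]. apply state_change_le; auto.
  - rewrite Rminus_0_r, Rabs_R0. lra.
Qed.

(* Error weights of the stale demand used at the [k]-th update of good [j]: buyer [i]'s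
   relative spending on each update of a good [h] during (tau j k, u j k). *)
Definition window_weight T i j k (f : nat -> nat -> R) :=
  rsum n (fun h => if supp i h then rsum (nupd h T) (fun k' => indR (tau j k < u h k' < u j k)
    (pseq h k' / (b i h * W i (state (u j k))) * f h k' * elapsed h k')) else 0).

Definition window_error T (f : nat -> nat -> R) j k :=
  rsum m (fun i => if supp i j then e i * share i (state (u j k)) j * window_weight T i j k f else 0).

Lemma demand_ratio j t1 s : (j < n)%nat -> 0 <= t1 <= s -> s <= t1 + 1 ->
  21/23 * xd (state s) j <= xd (state t1) j.
Proof.
  intros Hj Ht Hs. unfold aggregate_demand. rewrite <- rsum_scal. apply rsum_le. intros i Hi.
  destruct (supp i j) eqn:E; [|lra].
  destruct (unit_cost_ratio i t1 s Hi Ht Hs) as [W1 W2].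
  assert (0 < W i (state t1)) by (apply W_pos; auto; apply state_pos; lra).
  assert (0 < W i (state s)) by (apply W_pos; auto; apply state_pos; lra).
  pose proof (Hb i j Hi Hj E). pose proof (He i Hi).
  unfold Rdiv. rewrite !Rinv_mult.
  assert (0 < / b i j) by (apply Rinv_0_lt_compat; auto).
  assert (/ W i (state s) * (21/23) <= / W i (state t1)).
  { apply Rmult_le_reg_r with (W i (state s) * W i (state t1)); [nra|]. field_simplify; lra. }
  assert (0 < e i * / b i j) by nra. nra.
Qed.

Lemma unit_cost_stale_le T i j k t' : (i < m)%nat -> (j < n)%nat -> u j k <= T ->
  tau j k < t' <= u j k ->
  Rabs (W i (state (u j k)) - W i (state t')) <=
  lambda * W i (state (u j k)) * window_weight T i j k (fun h k' => Rabs (zcap h k')).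
Proof.
  intros Hi Hj HuT [Ht1 Ht2]. pose proof (tau_nonneg j k Hj).
  set (Wu := W i (state (u j k))).
  assert (HW : 0 < Wu) by (apply W_pos; auto; apply state_at_update_pos; auto).
  eapply Rle_trans; [apply (unit_cost_change_le i t' (u j k) T); auto; lra|].
  unfold window_weight. fold Wu. rewrite <- !rsum_scal. apply rsum_le. intros h Hh.
  destruct (supp i h) eqn:Eh; [|lra]. assert (Hbih := Hb i h Hi Hh Eh).
  rewrite <- !rsum_scal. apply rsum_le. intros k' Hk'.
  rewrite !indR_scal. apply indR_le_impl; [intros [? ?]; split; lra| |].
  - assert (0 < pseq h k' / (b i h * Wu)) by (apply Rdiv_lt_0_compat; [apply pseq_pos; auto| nra]).
    pose proof (elapsed_bounds h k' Hh). pose proof (Rabs_pos (zcap h k')).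
    apply Rmult_le_pos; [apply Rmult_le_pos; lra|].
    apply Rmult_le_pos; [apply Rmult_le_pos; [lra|apply Rabs_pos]|lra].
  - intros _. pose proof (elapsed_bounds h k' Hh). unfold rate.
    rewrite Rabs_mult, Rabs_mult, (Rabs_right lambda), (Rabs_right (elapsed h k')) by lra.
    right. field. split; lra.
Qed.

(* The demand sampled at [t'] differs from the demand at the update time only through
   the unit costs, which moved by the updates of other goods in between. *)
Lemma stale_demand_error_le T j k t' : (j < n)%nat -> u j k <= T -> tau j k < t' <= u j k ->
  pseq j k * Rabs (xd (state t') j - xd (state (u j k)) j) <=
  lambda * (23/21) * window_error T (fun h k' => Rabs (zcap h k')) j k.
Proof.
  intros Hj HuT [Ht1 Ht2]. pose proof (tau_nonneg j k Hj).
  unfold aggregate_demand. rewrite <- rsum_minus.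
  eapply Rle_trans; [apply Rmult_le_compat_l; [apply Rlt_le, pseq_pos; auto| apply Rabs_rsum_le]|].
  rewrite <- rsum_scal. unfold window_error. rewrite <- rsum_scal. apply rsum_le. intros i Hi.
  destruct (supp i j) eqn:E; [|rewrite Rminus_0_r, Rabs_R0; lra].
  set (q := state (u j k)). set (Wu := W i q). set (Wt := W i (state t')).
  set (I := window_weight T i j k (fun h k' => Rabs (zcap h k'))).
  assert (HW : 0 < Wu) by (apply W_pos; auto; apply state_at_update_pos; auto).
  assert (HW' : 0 < Wt) by (apply W_pos; auto; apply state_pos; lra).
  assert (HWW : Wu * (21/23) <= Wt).
  { apply (unit_cost_ratio i t' (u j k)); auto; try lra.
    pose proof (tau_lt j k Hj). pose proof (elapsed_bounds j k Hj). unfold elapsed in *; lra. }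
  assert (Hbij := Hb i j Hi Hj E). assert (Hei := He i Hi). assert (Hpk := pseq_pos j k Hj).
  assert (HA : Rabs (Wu - Wt) <= lambda * Wu * I) by (apply unit_cost_stale_le; auto; lra).
  assert (Hq : q j = pseq j k) by (apply state_at_update; auto).
  unfold cost_share. fold q Wu. rewrite Hq.
  set (w := pseq j k / (b i j * Wu)).
  assert (Hw : 0 < w) by (apply Rdiv_lt_0_compat; nra).
  assert (Hterm : pseq j k * Rabs (e i / (b i j * Wt) - e i / (b i j * Wu)) = e i * w * (Rabs (Wu - Wt) / Wt)).
  { replace (e i / (b i j * Wt) - e i / (b i j * Wu)) with ((e i * w / pseq j k / Wt) * (Wu - Wt))
      by (unfold w; field; repeat split; lra).
    assert (0 < e i * w / pseq j k / Wt) by (repeat apply Rdiv_lt_0_compat; nra).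
    rewrite Rabs_mult, (Rabs_right (e i * w / pseq j k / Wt)) by lra.
    field; repeat split; lra. }
  rewrite Hterm.
  assert (Rabs (Wu - Wt) / Wt <= (23/21) * Rabs (Wu - Wt) / Wu).
  { apply Rmult_le_reg_r with (Wu * Wt); [nra|]. pose proof (Rabs_pos (Wu - Wt)). field_simplify; try lra. nra. }
  assert (Rabs (Wu - Wt) / Wu <= lambda * I) by (apply Rmult_le_reg_r with Wu; auto; field_simplify; lra).
  assert (Rabs (Wu - Wt) / Wt <= lambda * (23/21) * I) by (eapply Rle_trans; [eassumption|]; unfold Rdiv in *; nra).
  assert (0 <= e i * w) by nra.
  apply Rle_trans with (e i * w * (lambda * (23/21) * I)); [apply Rmult_le_compat_l; auto| lra].
Qed.

Definition demand_at_update j k := xd (state (u j k)) j.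

(* [Zt j k + 1] lies between two sampled demands, each close to the demand at the update. *)
Lemma sampled_demand_bounds T j k : (j < n)%nat -> u j k <= T ->
  pseq j k * Rabs (Zt j k + 1 - demand_at_update j k) <=
    lambda * (23/21) * window_error T (fun h k' => Rabs (zcap h k')) j k /\
  21/23 * demand_at_update j k <= Zt j k + 1.
Proof.
  intros Hj HuT. destruct (HZt j k Hj) as [t1 [t2 [H1 [H2 [H3 [H4 [H5 H6]]]]]]].
  pose proof (tau_nonneg j k Hj). pose proof (pseq_pos j k Hj).
  rewrite excess_eq in H5, H6 by (auto; try lra; apply state_pos; lra).
  pose proof (stale_demand_error_le T j k t1 Hj HuT ltac:(lra)) as E1.
  pose proof (stale_demand_error_le T j k t2 Hj HuT ltac:(lra)) as E2.
  fold (demand_at_update j k) in E1, E2 |- *.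
  set (x := demand_at_update j k) in *.
  set (x1 := xd (state t1) j) in *. set (x2 := xd (state t2) j) in *.
  split.
  - destruct (Rle_dec x (Zt j k + 1)).
    + rewrite Rabs_right by lra. eapply Rle_trans; [|exact E2].
      apply Rmult_le_compat_l; [lra|]. rewrite Rabs_right; lra.
    + rewrite Rabs_left1 by lra. eapply Rle_trans; [|exact E1].
      apply Rmult_le_compat_l; [lra|]. rewrite Rabs_left1; lra.
  - assert (21/23 * x <= x1); [|lra].
    apply demand_ratio; auto; [lra|]. pose proof (elapsed_bounds j k Hj). unfold elapsed in *. lra.
Qed.

(* Second-order expansion of [potential] along the update, with the first-order term
   evaluated at the true demand up to the staleness error. *)
Lemma potential_jump_le T j k : (j < n)%nat -> u j k <= T ->
  potential_jump j k <=
    lambda * elapsed j k * pseq j k * (- (zcap j k * zcap j k) / 2 - 21/92 * (zcap j k * zcap j k) * demand_at_update j k)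
    + 23/22 * (lambda * lambda) * elapsed j k * (zcap j k * zcap j k) * pseq j k * demand_at_update j k
    + lambda * lambda * (23/21) * elapsed j k * Rabs (zcap j k) * window_error T (fun h k' => Rabs (zcap h k')) j k.
Proof.
  intros Hj HuT. set (q := state (u j k)).
  assert (Hqj : q j = pseq j k) by (apply state_at_update; auto).
  pose proof (elapsed_bounds j k Hj) as HD. pose proof (zcap_bounds j k Hj) as Hm. pose proof (pseq_pos j k Hj).
  assert (Ha : -1/23 <= rate j k <= 1/23).
  { pose proof (rate_abs_le j k Hj). pose proof (Rle_abs (rate j k)). pose proof (Rle_abs (- rate j k)).
    rewrite Rabs_Ropp in *. nra. }
  pose proof (potential_set_price_le n m supp b e HS Hb He q j (rate j k) (state_at_update_pos j k Hj) Hj Ha) as Hup.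
  replace (potential_jump j k) with (phi (set_price q j (q j * (1 + rate j k))) - phi q)
    by (unfold potential_jump; fold q; rewrite Hqj, pseq_step; auto).
  rewrite Hqj in Hup.
  destruct (sampled_demand_bounds T j k Hj HuT) as [Hdiff Hx1].
  set (Ev := lambda * (23/21) * window_error T (fun h k' => Rabs (zcap h k')) j k) in *.
  set (x := demand_at_update j k) in *. set (Z := Zt j k) in *. set (mk := zcap j k) in *.
  assert (Hx0 : 0 <= x) by (apply xd_nonneg; auto; apply state_at_update_pos; auto).
  assert (HG2 : mk * mk / 2 + 21/92 * (mk*mk) * x <= mk * Z) by (apply capped_drift_ge; auto).
  unfold rate in Hup |- *. fold mk in Hup |- *.
  assert (Hcross : lambda * elapsed j k * pseq j k * mk * (Z + 1 - x) <= lambda * elapsed j k * Rabs mk * Ev).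
  { assert (pseq j k * mk * (Z + 1 - x) <= Rabs mk * Ev).
    { rewrite Rmult_assoc.
      assert (mk * (Z + 1 - x) <= Rabs mk * Rabs (Z + 1 - x)) by (rewrite <- Rabs_mult; apply Rle_abs).
      pose proof (Rabs_pos mk). nra. }
    assert (0 <= lambda * elapsed j k) by nra. nra. }
  assert (Hsq : (lambda * mk * elapsed j k) * (lambda * mk * elapsed j k) <= lambda * lambda * elapsed j k * (mk * mk)).
  { assert (0 <= mk*mk) by nra. assert (0 <= lambda * lambda) by nra.
    replace ((lambda * mk * elapsed j k) * (lambda * mk * elapsed j k))
      with ((lambda*lambda) * (mk*mk) * (elapsed j k * elapsed j k)) by ring.
    replace (lambda * lambda * elapsed j k * (mk * mk)) with ((lambda*lambda) * (mk*mk) * (elapsed j k)) by ring.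
    apply Rmult_le_compat_l; nra. }
  assert (Hquad : 23/22 * ((lambda * mk * elapsed j k) * (lambda * mk * elapsed j k)) * pseq j k * x
          <= 23/22 * (lambda * lambda) * elapsed j k * (mk * mk) * pseq j k * x).
  { assert (0 <= pseq j k * x) by nra.
    replace (23/22 * ((lambda * mk * elapsed j k) * (lambda * mk * elapsed j k)) * pseq j k * x)
      with (23/22 * ((lambda * mk * elapsed j k) * (lambda * mk * elapsed j k)) * (pseq j k * x)) by ring.
    replace (23/22 * (lambda * lambda) * elapsed j k * (mk * mk) * pseq j k * x)
      with (23/22 * (lambda * lambda * elapsed j k * (mk * mk)) * (pseq j k * x)) by ring.
    apply Rmult_le_compat_r; lra. }
  assert (Hdrift : lambda * elapsed j k * pseq j k * (mk * Z) >= lambda * elapsed j k * pseq j k * (mk * mk / 2 + 21/92 * (mk*mk) * x)).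
  { apply Rle_ge, Rmult_le_compat_l; [|lra]. assert (0 < lambda * elapsed j k) by nra. nra. }
  assert (Hsplit : - (lambda * mk * elapsed j k) * pseq j k * (x - 1)
          = - (lambda * elapsed j k * pseq j k * (mk * Z)) + lambda * elapsed j k * pseq j k * mk * (Z + 1 - x)) by ring.
  rewrite Hqj. change (xd q j) with x in Hup. unfold Ev in *. lra.
Qed.

Lemma window_weight_scal T i j k f c :
  c * window_weight T i j k f = window_weight T i j k (fun h k' => c * f h k').
Proof.
  unfold window_weight. rewrite <- rsum_scal. apply rsum_ext. intros h Hh. destruct (supp i h); [|ring].
  rewrite <- rsum_scal. apply rsum_ext. intros k' Hk'. rewrite indR_scal. f_equal. ring.
Qed.

Lemma window_weight_plus T i j k f g :
  window_weight T i j k f + window_weight T i j k g = window_weight T i j k (fun h k' => f h k' + g h k').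
Proof.
  unfold window_weight. rewrite <- rsum_plus. apply rsum_ext. intros h Hh. destruct (supp i h); [|ring].
  rewrite <- rsum_plus. apply rsum_ext. intros k' Hk'. unfold indR. destruct excluded_middle_informative; ring.
Qed.

Lemma window_weight_le T i j k f g : (i < m)%nat -> (j < n)%nat ->
  (forall h k', (h < n)%nat -> f h k' <= g h k') -> window_weight T i j k f <= window_weight T i j k g.
Proof.
  intros Hi Hj Hfg. unfold window_weight. apply rsum_le. intros h Hh. destruct (supp i h) eqn:E; [|lra].
  apply rsum_le. intros k' Hk'. apply indR_le. intros _.
  assert (0 < pseq h k' / (b i h * W i (state (u j k)))).
  { apply Rdiv_lt_0_compat; [apply pseq_pos; auto|].
    apply Rmult_lt_0_compat; [apply Hb; auto| apply W_pos; auto; apply state_at_update_pos; auto]. }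
  pose proof (elapsed_bounds h k' Hh). specialize (Hfg h k' Hh).
  apply Rmult_le_compat_r; [lra|]. apply Rmult_le_compat_l; lra.
Qed.

Lemma window_error_amgm T j k : (j < n)%nat ->
  Rabs (zcap j k) * window_error T (fun h k' => Rabs (zcap h k')) j k <=
  (zcap j k * zcap j k) / 2 * window_error T (fun _ _ => 1) j k
  + 1/2 * window_error T (fun h k' => zcap h k' * zcap h k') j k.
Proof.
  intros Hj. unfold window_error. rewrite <- !rsum_scal, <- rsum_plus. apply rsum_le. intros i Hi.
  destruct (supp i j) eqn:E; [|lra].
  assert (0 <= e i * share i (state (u j k)) j).
  { apply Rlt_le, Rmult_lt_0_compat; [auto|]. apply share_bounds; auto. apply state_at_update_pos; auto. }
  set (c := e i * share i (state (u j k)) j) in *.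
  assert (Rabs (zcap j k) * window_weight T i j k (fun h k' => Rabs (zcap h k')) <=
          (zcap j k * zcap j k) / 2 * window_weight T i j k (fun _ _ => 1)
          + 1/2 * window_weight T i j k (fun h k' => zcap h k' * zcap h k')).
  { rewrite !window_weight_scal, window_weight_plus. apply window_weight_le; auto. intros h k' Hh.
    assert (Rabs (zcap h k') * Rabs (zcap h k') = zcap h k' * zcap h k')
      by (rewrite <- Rabs_mult; apply Rabs_right; nra).
    assert (Rabs (zcap j k) * Rabs (zcap j k) = zcap j k * zcap j k)
      by (rewrite <- Rabs_mult; apply Rabs_right; nra).
    pose proof (Rle_0_sqr (Rabs (zcap j k) - Rabs (zcap h k'))). unfold Rsqr in *. lra. }
  assert (c * (Rabs (zcap j k) * window_weight T i j k (fun h k' => Rabs (zcap h k'))) <=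
          c * ((zcap j k * zcap j k) / 2 * window_weight T i j k (fun _ _ => 1)
               + 1/2 * window_weight T i j k (fun h k' => zcap h k' * zcap h k')))
    by (apply Rmult_le_compat_l; auto).
  lra.
Qed.

(* Each good [h] is updated for total time at most 2 during the window, at prices within
   a factor [23/21] of those at the end of the window. *)
Lemma window_weight_one_le T i j k : (i < m)%nat -> (j < n)%nat -> u j k <= T ->
  window_weight T i j k (fun _ _ => 1) <= 2 * (23/21).
Proof.
  intros Hi Hj HuT.
  set (W0 := W i (state (u j k))).
  assert (HW : 0 < W0) by (apply W_pos; auto; apply state_at_update_pos; auto).
  pose proof (tau_nonneg j k Hj). pose proof (elapsed_bounds j k Hj) as HDj. unfold elapsed in HDj.
  unfold window_weight. fold W0.
  apply Rle_trans with (rsum n (fun h => if supp i h then 2 * (23/21) * (state (u j k) h / b i h / W0) else 0)).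
  - apply rsum_le. intros h Hh. destruct (supp i h) eqn:Eh; [|lra].
    assert (Hbih := Hb i h Hi Hh Eh).
    assert (0 <= (23/21) * (state (u j k) h / b i h / W0)).
    { apply Rmult_le_pos; [lra|]. apply Rlt_le, Rdiv_lt_0_compat; [|lra].
      apply Rdiv_lt_0_compat; auto. apply state_at_update_pos; auto. }
    apply Rle_trans with (rsum (nupd h T) (fun k' => (23/21) * (state (u j k) h / b i h / W0)
                                                    * indR (tau j k <= u h k' < u j k) (elapsed h k'))).
    + apply rsum_le. intros k' Hk'. rewrite indR_scal. apply indR_le_impl; [intros [? ?]; split; lra| |].
      * apply Rmult_le_pos; [lra|]. apply Rlt_le, elapsed_bounds; auto.
      * intros [Hw1 Hw2].
        destruct (state_ratio h (u h k') (u j k) Hh ltac:(split; [apply Rlt_le, update_time_pos; auto|lra])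
                    ltac:(lra)) as [R1 R2].
        rewrite state_at_update in R1 by auto.
        pose proof (elapsed_bounds h k' Hh).
        assert (pseq h k' / (b i h * W0) <= 23/21 * (state (u j k) h / b i h / W0)).
        { replace (pseq h k' / (b i h * W0)) with (pseq h k' / b i h / W0) by (field; split; lra).
          unfold Rdiv. assert (0 < / b i h) by (apply Rinv_0_lt_compat; lra).
          assert (0 < / W0) by (apply Rinv_0_lt_compat; lra).
          assert (pseq h k' * / b i h <= 23/21 * state (u j k) h * / b i h) by (apply Rmult_le_compat_r; lra).
          assert (pseq h k' * / b i h * / W0 <= 23/21 * state (u j k) h * / b i h * / W0)
            by (apply Rmult_le_compat_r; lra).
          lra. }
        rewrite Rmult_1_r. apply Rmult_le_compat_r; lra.
    + rewrite rsum_scal. pose proof (elapsed_sum_window_le h (tau j k) (u j k) (nupd h T) Hh).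
      assert (Rmax 0 (u j k - tau j k + 1) <= 2) by (unfold Rmax; destruct Rle_dec; lra).
      nra.
  - right. assert (HW0 : rsum n (fun h => if supp i h then state (u j k) h / b i h else 0) = W0) by reflexivity.
    transitivity (2 * (23/21) * (rsum n (fun h => if supp i h then state (u j k) h / b i h else 0) * / W0)).
    + rewrite <- rsum_scal_r, <- rsum_scal. apply rsum_ext. intros h Hh.
      destruct (supp i h); [unfold Rdiv; ring|ring].
    + rewrite HW0. field. lra.
Qed.

Lemma window_error_one_le T j k : (j < n)%nat -> u j k <= T ->
  window_error T (fun _ _ => 1) j k <= 2 * (23/21) * pseq j k * demand_at_update j k.
Proof.
  intros Hj HuT. unfold demand_at_update. rewrite <- (state_at_update j k Hj) at 1.
  rewrite Rmult_assoc, spending_eq, <- rsum_scal. unfold window_error. apply rsum_le.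
  intros i Hi. destruct (supp i j) eqn:E; [|lra].
  assert (0 < e i * share i (state (u j k)) j).
  { apply Rmult_lt_0_compat; [auto|]. apply share_bounds; auto. apply state_at_update_pos; auto. }
  pose proof (window_weight_one_le T i j k Hi Hj HuT). nra.
Qed.

(* Charging the error term to the update [(h, k')] that caused it: during the window the
   price of [j] is [pseq j k], that of [h] is [pseq h k'], and unit costs move by at most
   a factor [23/21]. *)
Lemma window_term_le i j k h k' : (i < m)%nat -> (j < n)%nat -> (h < n)%nat ->
  supp i j = true -> supp i h = true -> tau j k < u h k' < u j k ->
  elapsed j k * (e i * share i (state (u j k)) j) *
    (pseq h k' / (b i h * W i (state (u j k))) * (zcap h k' * zcap h k') * elapsed h k')
  <= elapsed j k * ((23/21) * (23/21) * (e i * share i (state (u h k')) j * share i (state (u h k')) h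
       * (zcap h k' * zcap h k') * elapsed h k')).
Proof.
  intros Hi Hj Hh Eij Eih Hw.
  assert (Hu1 : u j k <= u h k' + 1) by (pose proof (elapsed_bounds j k Hj); unfold elapsed in *; lra).
  assert (HuV : 0 <= u h k') by (apply Rlt_le, update_time_pos; auto).
  assert (HqUj : state (u j k) j = pseq j k) by (apply state_at_update; auto).
  assert (HqVj : state (u h k') j = pseq j k) by (apply state_in_window; auto; lra).
  assert (HqVh : state (u h k') h = pseq h k') by (apply state_at_update; auto).
  destruct (unit_cost_ratio i (u h k') (u j k) Hi ltac:(lra) Hu1) as [WR _].
  set (WU := W i (state (u j k))) in *. set (WV := W i (state (u h k'))) in *.
  assert (HWU : 0 < WU) by (apply W_pos; auto; apply state_pos; lra).
  assert (HWV : 0 < WV) by (apply W_pos; auto; apply state_pos; lra).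
  unfold cost_share. fold WU WV. rewrite HqUj, HqVj, HqVh.
  pose proof (Hb i j Hi Hj Eij). pose proof (Hb i h Hi Hh Eih). pose proof (He i Hi).
  pose proof (pseq_pos j k Hj). pose proof (pseq_pos h k' Hh).
  pose proof (elapsed_bounds j k Hj). pose proof (elapsed_bounds h k' Hh).
  assert (Hinv : / WU <= 23/21 * / WV) by (apply Rmult_le_reg_r with (WU * WV); [nra|]; field_simplify; lra).
  assert (Hinv2 : / WU * / WU <= (23/21) * (23/21) * (/ WV * / WV)).
  { assert (0 < / WU) by (apply Rinv_0_lt_compat; lra). nra. }
  set (K := elapsed j k * e i * (pseq j k * / b i j) * (pseq h k' * / b i h) * (zcap h k' * zcap h k') * elapsed h k').
  assert (HK : 0 <= K).
  { unfold K. assert (0 <= zcap h k' * zcap h k') by nra.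
    assert (0 < / b i j) by (apply Rinv_0_lt_compat; lra). assert (0 < / b i h) by (apply Rinv_0_lt_compat; lra).
    apply Rmult_le_pos; [|lra]. apply Rmult_le_pos; [|lra].
    apply Rmult_le_pos; [|nra]. apply Rmult_le_pos; [|nra]. apply Rmult_le_pos; lra. }
  replace (elapsed j k * (e i * (pseq j k / (b i j * WU))) * (pseq h k' / (b i h * WU) * (zcap h k' * zcap h k') * elapsed h k'))
    with (K * (/ WU * / WU)) by (unfold K; field; repeat split; lra).
  replace (elapsed j k * (23 / 21 * (23 / 21) * (e i * (pseq j k / (b i j * WV)) * (pseq h k' / (b i h * WV))
             * (zcap h k' * zcap h k') * elapsed h k')))
    with (K * ((23/21) * (23/21) * (/ WV * / WV))) by (unfold K; field; repeat split; lra).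
  apply Rmult_le_compat_l; auto.
Qed.

(* The windows containing [u h k'] of one good [j] have total length at most 1, and the
   cost shares of a buyer sum to 1. *)
Lemma update_charge_le T h k' : (h < n)%nat ->
  rsum m (fun i => rsum n (fun j => rsum (nupd j T) (fun k =>
    if supp i j then (if supp i h then
      indR (tau j k < u h k' < u j k) (elapsed j k) * ((23/21) * (23/21) * (e i * share i (state (u h k')) j
        * share i (state (u h k')) h * (zcap h k' * zcap h k') * elapsed h k')) else 0) else 0)))
  <= (23/21) * (23/21) * (zcap h k' * zcap h k' * elapsed h k' * pseq h k' * demand_at_update h k').
Proof.
  intros Hh. set (qV := state (u h k')).
  assert (HqV : forall g, (g < n)%nat -> 0 < qV g) by (apply state_at_update_pos; auto).
  assert (Hmm0 : 0 <= zcap h k' * zcap h k') by nra.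
  pose proof (elapsed_bounds h k' Hh) as HDV.
  apply Rle_trans with (rsum m (fun i => if supp i h then
    (23/21) * (23/21) * (e i * share i qV h * (zcap h k' * zcap h k') * elapsed h k') else 0)).
  - apply rsum_le. intros i Hi. destruct (supp i h) eqn:Eih.
    2:{ rewrite (rsum_ext n _ (fun _ => 0)); [rewrite rsum_zero; lra|].
        intros j Hj. destruct (supp i j); apply rsum_zero. }
    set (C := fun j => (23/21) * (23/21) * (e i * share i qV j * share i qV h * (zcap h k' * zcap h k') * elapsed h k')).
    assert (HC0 : forall j, (j < n)%nat -> supp i j = true -> 0 <= C j).
    { intros j Hj Eij. unfold C. pose proof (He i Hi).
      pose proof (share_bounds i qV j Hi Hj Eij HqV). pose proof (share_bounds i qV h Hi Hh Eih HqV).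
      apply Rmult_le_pos; [lra|]. apply Rmult_le_pos; [|lra]. apply Rmult_le_pos; [|lra].
      apply Rmult_le_pos; [|lra]. apply Rmult_le_pos; lra. }
    apply Rle_trans with (rsum n (fun j => if supp i j then C j else 0)).
    + apply rsum_le. intros j Hj. destruct (supp i j) eqn:Eij; [|rewrite rsum_zero; lra].
      rewrite rsum_scal_r. pose proof (elapsed_sum_covering_le j (u h k') (nupd j T) Hj).
      pose proof (HC0 j Hj Eij). unfold C in *. fold qV. nra.
    + right. rewrite <- (Rmult_1_r (_ * _ * _)), <- (cost_shares_sum1 n m supp b HS Hb i qV Hi HqV), <- rsum_scal.
      apply rsum_ext. intros j Hj. unfold C. destruct (supp i j); ring.
  - right. unfold demand_at_update. fold qV. rewrite <- (state_at_update h k' Hh). fold qV.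
    replace (zcap h k' * zcap h k' * elapsed h k' * qV h * xd qV h)
      with (zcap h k' * zcap h k' * elapsed h k' * (qV h * xd qV h)) by ring.
    rewrite spending_eq, <- !rsum_scal. apply rsum_ext. intros i Hi. destruct (supp i h); ring.
Qed.

Lemma window_error_total_le T :
  rsum n (fun j => rsum (nupd j T) (fun k => elapsed j k * window_error T (fun h k' => zcap h k' * zcap h k') j k))
  <= (23/21) * (23/21) * rsum n (fun h => rsum (nupd h T) (fun k' =>
       zcap h k' * zcap h k' * elapsed h k' * pseq h k' * demand_at_update h k')).
Proof.
  set (F1 := fun j k i h k' => if supp i j then (if supp i h then
      indR (tau j k < u h k' < u j k) (elapsed j k * (e i * share i (state (u j k)) j) *
         (pseq h k' / (b i h * W i (state (u j k))) * (zcap h k' * zcap h k') * elapsed h k')) else 0) else 0).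
  set (F2 := fun j k i h k' => if supp i j then (if supp i h then
      indR (tau j k < u h k' < u j k) (elapsed j k) * ((23/21) * (23/21) * (e i * share i (state (u h k')) j *
         share i (state (u h k')) h * (zcap h k' * zcap h k') * elapsed h k')) else 0) else 0).
  transitivity (rsum n (fun j => rsum (nupd j T) (fun k => rsum m (fun i => rsum n (fun h =>
                  rsum (nupd h T) (fun k' => F2 j k i h k')))))).
  - transitivity (rsum n (fun j => rsum (nupd j T) (fun k => rsum m (fun i => rsum n (fun h =>
                    rsum (nupd h T) (fun k' => F1 j k i h k')))))).
    + right. apply rsum_ext; intros j Hj; apply rsum_ext; intros k Hk.
      unfold window_error. rewrite <- rsum_scal. apply rsum_ext. intros i Hi.
      unfold F1, window_weight. destruct (supp i j).
      2:{ rewrite (rsum_ext n _ (fun _ => 0)); [rewrite rsum_zero; ring|]. intros; apply rsum_zero. }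
      rewrite <- !rsum_scal. apply rsum_ext. intros h Hh. destruct (supp i h); [|rewrite rsum_zero; ring].
      rewrite <- !rsum_scal. apply rsum_ext. intros k' Hk'. rewrite !indR_scal. f_equal. ring.
    + apply rsum_le; intros j Hj; apply rsum_le; intros k Hk; apply rsum_le; intros i Hi;
        apply rsum_le; intros h Hh; apply rsum_le; intros k' Hk'.
      unfold F1, F2. destruct (supp i j) eqn:Eij; [|lra]. destruct (supp i h) eqn:Eih; [|lra].
      destruct (excluded_middle_informative (tau j k < u h k' < u j k)) as [Hw|Hw].
      * rewrite !indR_T by auto. apply window_term_le; auto.
      * rewrite !indR_F by auto. lra.
  - rewrite rsum_swap5, <- rsum_scal. apply rsum_le. intros h Hh. rewrite <- rsum_scal.
    apply rsum_le. intros k' Hk'. apply update_charge_le; auto.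
Qed.

Definition progress T :=
  rsum n (fun g => rsum (nupd g T) (fun k => elapsed g k * pseq g k * (zcap g k * zcap g k))).

Lemma progress_term_nonneg g k : (g < n)%nat -> 0 <= elapsed g k * pseq g k * (zcap g k * zcap g k).
Proof.
  intros Hg. pose proof (elapsed_bounds g k Hg). pose proof (pseq_pos g k Hg).
  assert (0 <= zcap g k * zcap g k) by nra.
  apply Rmult_le_pos; [|lra]. apply Rmult_le_pos; lra.
Qed.

Lemma demand_at_update_nonneg j k : (j < n)%nat -> 0 <= demand_at_update j k.
Proof. intros Hj. apply xd_nonneg; auto. apply state_at_update_pos; auto. Qed.

Lemma potential_jump_le_split T j k : (j < n)%nat -> u j k <= T ->
  potential_jump j k <=
    - (lambda / 2) * (elapsed j k * pseq j k * (zcap j k * zcap j k))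
    + (- 21/92 * lambda + lambda * lambda * (23/22 + (23/21) * (23/21)))
      * (zcap j k * zcap j k * elapsed j k * pseq j k * demand_at_update j k)
    + lambda * lambda * (23/21) / 2 * (elapsed j k * window_error T (fun h k' => zcap h k' * zcap h k') j k).
Proof.
  intros Hj HuT.
  pose proof (potential_jump_le T j k Hj HuT). pose proof (window_error_amgm T j k Hj).
  pose proof (window_error_one_le T j k Hj HuT).
  pose proof (elapsed_bounds j k Hj). pose proof (pseq_pos j k Hj). pose proof (demand_at_update_nonneg j k Hj).
  assert (Hm0 : 0 <= zcap j k * zcap j k) by nra.
  set (E1 := window_error T (fun _ _ => 1) j k) in *.
  set (E2 := window_error T (fun h k' => zcap h k' * zcap h k') j k) in *.
  set (E3 := window_error T (fun h k' => Rabs (zcap h k')) j k) in *.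
  assert (Hb3 : Rabs (zcap j k) * E3 <= (zcap j k * zcap j k) * (23/21) * pseq j k * demand_at_update j k + 1/2 * E2).
  { assert ((zcap j k * zcap j k) / 2 * E1 <= (zcap j k * zcap j k) / 2 * (2 * (23/21) * pseq j k * demand_at_update j k))
      by (apply Rmult_le_compat_l; lra).
    lra. }
  assert (0 <= lambda * lambda * (23/21) * elapsed j k) by (apply Rmult_le_pos; [nra|lra]).
  assert (lambda * lambda * (23 / 21) * elapsed j k * Rabs (zcap j k) * E3 <= lambda * lambda * (23 / 21) * elapsed j k *
            ((zcap j k * zcap j k) * (23/21) * pseq j k * demand_at_update j k + 1/2 * E2))
    by (rewrite Rmult_assoc; apply Rmult_le_compat_l; auto).
  lra.
Qed.

(* With [lambda <= 1/23] the positive second-order and staleness terms are dominated by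
   the [- 21/92 lambda] drift term. *)
Lemma potential_decrease T : 0 < T -> phi (state T) - phi p0 <= - (lambda / 2) * progress T.
Proof.
  intros HT. rewrite (potential_telescope T HT).
  set (Kc := - 21/92 * lambda + lambda * lambda * (23/22 + (23/21) * (23/21))).
  apply Rle_trans with (rsum n (fun g => rsum (nupd g T) (fun k =>
     - (lambda / 2) * (elapsed g k * pseq g k * (zcap g k * zcap g k))
     + Kc * (zcap g k * zcap g k * elapsed g k * pseq g k * demand_at_update g k)
     + lambda * lambda * (23/21) / 2 * (elapsed g k * window_error T (fun h k' => zcap h k' * zcap h k') g k)))).
  - apply rsum_le. intros j Hj. apply rsum_le. intros k Hk.
    apply potential_jump_le_split; auto. apply Rlt_le, nupd_spec; auto.
  - rewrite (rsum_ext n _ (fun g => - (lambda/2) * rsum (nupd g T) (fun k => elapsed g k * pseq g k * (zcap g k * zcap g k))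
        + Kc * rsum (nupd g T) (fun k => zcap g k * zcap g k * elapsed g k * pseq g k * demand_at_update g k)
        + lambda * lambda * (23/21) / 2 * rsum (nupd g T) (fun k => elapsed g k * window_error T (fun h k' => zcap h k' * zcap h k') g k)))
      by (intros g Hg; rewrite !rsum_plus, !rsum_scal; ring).
    rewrite !rsum_plus, !rsum_scal. fold (progress T).
    pose proof (window_error_total_le T).
    set (SA := rsum n (fun g => rsum (nupd g T) (fun k => zcap g k * zcap g k * elapsed g k * pseq g k * demand_at_update g k))) in *.
    set (SB := rsum n (fun g => rsum (nupd g T) (fun k => elapsed g k * window_error T (fun h k' => zcap h k' * zcap h k') g k))) in *.
    assert (0 <= SA).
    { apply rsum_nonneg. intros g Hg. apply rsum_nonneg. intros k Hk.
      pose proof (progress_term_nonneg g k Hg). pose proof (demand_at_update_nonneg g k Hg).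
      replace (zcap g k * zcap g k * elapsed g k * pseq g k * demand_at_update g k)
        with (elapsed g k * pseq g k * (zcap g k * zcap g k) * demand_at_update g k) by ring.
      apply Rmult_le_pos; lra. }
    assert (Kc + lambda * lambda * (23/21) / 2 * ((23/21) * (23/21)) <= 0).
    { unfold Kc. assert (lambda * (23/22 + (23/21)*(23/21) + (23/21)*(23/21)*(23/21)/2) <= 21/92).
      { apply Rle_trans with (1/23 * (23/22 + (23/21)*(23/21) + (23/21)*(23/21)*(23/21)/2)); [|lra].
        apply Rmult_le_compat_r; lra. }
      nra. }
    assert (0 <= lambda * lambda * (23/21) / 2) by nra.
    assert (lambda * lambda * (23/21) / 2 * SB <= lambda * lambda * (23/21) / 2 * ((23/21) * (23/21) * SA))
      by (apply Rmult_le_compat_l; auto).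
    nra.
Qed.

Lemma progress_bounded : exists M, forall T, 0 < T -> progress T <= M.
Proof.
  destruct (potential_bounded_below n m supp b e HS Hb He) as [K HK].
  exists (2 * (phi p0 - K) / lambda). intros T HT.
  pose proof (potential_decrease T HT). pose proof (HK (state T) (state_pos T ltac:(lra))).
  apply Rmult_le_reg_l with (lambda / 2); [nra|]. field_simplify; lra.
Qed.

Lemma progress_tail_le g T0 T1 : (g < n)%nat -> T0 <= T1 ->
  rsum (nupd g T1) (fun k => indR (T0 <= u g k) (elapsed g k * pseq g k * (zcap g k * zcap g k)))
  <= progress T1 - progress T0.
Proof.
  intros Hg HT.
  set (tail := fun g => rsum (nupd g T1) (fun k => indR (T0 <= u g k) (elapsed g k * pseq g k * (zcap g k * zcap g k)))).
  assert (progress T1 = progress T0 + rsum n tail).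
  { unfold progress, tail. rewrite <- rsum_plus. apply rsum_ext. intros h Hh.
    rewrite (rsum_extend (nupd h T0) (nupd h T1)) by (apply nupd_mono; auto).
    rewrite <- rsum_plus. apply rsum_ext. intros k Hk. destruct (Nat.ltb_spec k (nupd h T0)).
    - rewrite indR_F; [ring|]. assert (u h k < T0) by (apply nupd_spec; auto). lra.
    - rewrite indR_T; [ring|]. destruct (Rle_dec T0 (u h k)); auto.
      assert (k < nupd h T0)%nat by (apply nupd_spec; auto; lra). lia. }
  pose proof (rsum_term_le n tail g ltac:(intros; apply rsum_nonneg; intros; apply indR_nonneg, progress_term_nonneg; auto) Hg).
  unfold tail in *. lra.
Qed.

(* AM-GM [|z| <= z^2 / (2 eta) + eta / 2] on one price move. *)
Lemma price_move_le eta g k : 0 < eta -> (g < n)%nat ->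
  pseq g k * Rabs (rate g k) <=
  lambda * (1 / (2 * eta)) * (elapsed g k * pseq g k * (zcap g k * zcap g k))
  + lambda * eta * price_bound / 2 * elapsed g k.
Proof.
  intros Heta Hg.
  pose proof (elapsed_bounds g k Hg). pose proof (pseq_pos g k Hg). pose proof (pseq_bounded g k Hg).
  unfold rate. rewrite Rabs_mult, Rabs_mult, (Rabs_right lambda), (Rabs_right (elapsed g k)) by lra.
  set (mk := zcap g k) in *. set (pk := pseq g k) in *. set (D := elapsed g k) in *.
  assert (Rabs mk <= mk * mk / (2 * eta) + eta / 2).
  { pose proof (Rle_0_sqr (Rabs mk - eta)). unfold Rsqr in *.
    assert (Rabs mk * Rabs mk = mk * mk) by (rewrite <- Rabs_mult; apply Rabs_right; nra).
    apply Rmult_le_reg_l with (2 * eta); [lra|]. field_simplify; lra. }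
  assert (pk * (lambda * Rabs mk * D) <= lambda * D * pk * (mk * mk / (2 * eta) + eta / 2)).
  { replace (pk * (lambda * Rabs mk * D)) with (lambda * D * pk * Rabs mk) by ring.
    apply Rmult_le_compat_l; [|lra]. apply Rmult_le_pos; [|lra]. apply Rmult_le_pos; lra. }
  assert (lambda * D * pk * (eta / 2) <= lambda * D * price_bound * (eta / 2))
    by (apply Rmult_le_compat_r; [lra|]; apply Rmult_le_compat_l; nra).
  assert (lambda * D * pk * (mk * mk / (2 * eta) + eta / 2)
          = lambda * (1 / (2 * eta)) * (D * pk * (mk * mk)) + lambda * D * pk * (eta / 2)) by (field; lra).
  lra.
Qed.

(* Eventually the remaining [progress] is below [delta]; a move of [p_j] over a time step
   [dt <= 1] is bounded by AM-GM by part of that remainder plus [eta] times the time. *)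
Theorem prices_settle eps : 0 < eps ->
  exists T, 0 <= T /\
    forall j t dt, (j < n)%nat -> T <= t -> 0 <= dt -> dt <= 1 -> Rabs (p j t - p j (t + dt)) <= eps.
Proof.
  intros Heps. destruct progress_bounded as [M HM].
  assert (HBp0 : 0 <= price_bound).
  { unfold price_bound. assert (0 <= rsum n p0) by (apply rsum_nonneg; intros; apply Rlt_le; auto).
    assert (0 <= rsum m e) by (apply rsum_nonneg; intros; apply Rlt_le; auto). nra. }
  set (eta := eps / (2 * lambda * (price_bound + 1))).
  assert (Heta : 0 < eta) by (apply Rdiv_lt_0_compat; nra).
  set (delta := eps * eta / lambda).
  assert (Hdelta : 0 < delta) by (apply Rdiv_lt_0_compat; nra).
  destruct (near_sup_exists progress M HM delta Hdelta) as [T0 [HT0 HT0s]].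
  exists T0. split; [lra|]. intros j t dt Hj Ht Hdt0 Hdt1.
  set (T1 := t + dt + 1).
  rewrite !price_path_eq, Rabs_minus_sym by (auto; lra).
  eapply Rle_trans; [apply (state_change_le j t (t + dt) T1); auto; unfold T1; lra|].
  set (c1 := lambda * (1 / (2 * eta))). set (c2 := lambda * eta * price_bound / 2).
  assert (Hc1 : 0 <= c1) by (apply Rmult_le_pos; [lra|]; apply Rlt_le, Rdiv_lt_0_compat; lra).
  assert (Hc2 : 0 <= c2) by (apply Rmult_le_pos; [|lra]; apply Rmult_le_pos; nra).
  apply Rle_trans with (rsum (nupd j T1) (fun k =>
    c1 * indR (T0 <= u j k) (elapsed j k * pseq j k * (zcap j k * zcap j k))
    + c2 * indR (t <= u j k < t + dt) (elapsed j k))).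
  - apply rsum_le. intros k Hk. rewrite !indR_scal.
    pose proof (elapsed_bounds j k Hj).
    destruct (excluded_middle_informative (t <= u j k < t + dt)) as [Hw|Hw].
    + rewrite !indR_T by (auto; lra). apply price_move_le; auto.
    + rewrite !(indR_F (t <= u j k < t + dt)), Rplus_0_r by auto.
      apply indR_nonneg, Rmult_le_pos; [lra| apply progress_term_nonneg; auto].
  - rewrite rsum_plus, !rsum_scal.
    pose proof (progress_tail_le j T0 T1 Hj ltac:(unfold T1; lra)).
    pose proof (HT0s T1 ltac:(unfold T1; lra)).
    pose proof (elapsed_sum_window_le j t (t + dt) (nupd j T1) Hj).
    assert (Rmax 0 (t + dt - t + 1) <= 2) by (unfold Rmax; destruct Rle_dec; lra).
    assert (c1 * delta = eps / 2) by (unfold c1, delta; field; lra).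
    assert (c2 * 2 <= eps / 2).
    { unfold c2, eta. apply Rmult_le_reg_r with (2 * lambda * (price_bound + 1)); [nra|].
      field_simplify; nra. }
    set (A1 := rsum (nupd j T1) (fun k => indR (T0 <= u j k) (elapsed j k * pseq j k * (zcap j k * zcap j k)))) in *.
    set (A2 := rsum (nupd j T1) (fun k => indR (t <= u j k < t + dt) (elapsed j k))) in *.
    assert (c1 * A1 <= c1 * delta) by (apply Rmult_le_compat_l; lra).
    assert (c2 * A2 <= c2 * 2) by (apply Rmult_le_compat_l; lra).
    lra.
Qed.

End Tatonnement.

Theorem mainTheorem7
  (n m : nat)
  (S : nat -> nat -> bool) (b : nat -> nat -> R) (e : nat -> R)
  (HS : forall i, (i < m)%nat -> exists j, (j < n)%nat /\ S i j = true)
  (Hb : forall i j, (i < m)%nat -> (j < n)%nat -> S i j = true -> 0 < b i j)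
  (He : forall i, (i < m)%nat -> 0 < e i)
  (X : nat -> (nat -> R) -> nat -> R)
  (HX : forall p, (forall j, (j < n)%nat -> 0 < p j) ->
        forall i, (i < m)%nat -> leontief_demand n (S i) (b i) (e i) p (X i p))
  (lambda : R) (Hlam0 : 0 < lambda) (Hlam1 : lambda <= 100 / 2346)
  (p0 : nat -> R) (Hp0 : forall j, (j < n)%nat -> 0 < p0 j)
  (u : nat -> nat -> R)
  (Hu0 : forall j, (j < n)%nat -> 0 < u j 0%nat /\ u j 0%nat <= 1)
  (Hu_incr : forall j k, (j < n)%nat -> u j k < u j (Datatypes.S k))
  (Hu_gap : forall j k, (j < n)%nat -> u j (Datatypes.S k) - u j k <= 1)
  (Hu_discrete : forall j T, (j < n)%nat -> exists k, T < u j k)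
  (Hu_nosim : forall j j' k k', (j < n)%nat -> (j' < n)%nat ->
                u j k = u j' k' -> j = j')
  (tau : nat -> nat -> R)
  (Htau : forall j k, tau j k = match k with O => 0 | Datatypes.S k' => u j k' end)
  (p : nat -> R -> R) (P : nat -> nat -> R)
  (Hp_init : forall j t, (j < n)%nat -> 0 <= t -> t <= u j 0%nat -> p j t = p0 j)
  (Hp_step : forall j k t, (j < n)%nat -> u j k < t -> t <= u j (Datatypes.S k) ->
               p j t = P j k)
  (Zt : nat -> nat -> R)
  (HZt : forall j k, (j < n)%nat ->
     exists t1 t2,
       tau j k < t1 /\ t1 <= u j k /\ tau j k < t2 /\ t2 <= u j k /\
       excess m X (fun g => p g t1) j <= Zt j k /\
       Zt j k <= excess m X (fun g => p g t2) j)
  (HP : forall j k, (j < n)%nat ->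
     P j k = p j (u j k) * (1 + lambda * Rmin (Zt j k) 1 * (u j k - tau j k))) :
  forall eps, 0 < eps ->
  exists T, 0 <= T /\
    forall j t dt, (j < n)%nat -> T <= t -> 0 <= dt -> dt <= 1 ->
      Rabs (p j t - p j (t + dt)) <= eps.
Proof.
  assert (Hlam : lambda <= 1/23) by lra.
  exact (prices_settle n m S b e HS Hb He X HX lambda Hlam0 Hlam p0 Hp0 u Hu0 Hu_incr Hu_gap
           Hu_discrete Hu_nosim tau Htau p P Hp_init Hp_step Zt HZt HP).
Qed.
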